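(* Let $\Gamma$ be a metric graph and $D$ an effective divisor of degree $d$ on $\Gamma$. Then the complete linear system $|D|$, viewed (via $E\mapsto\sum E(p)\delta_p$) as a subset of $\operatorname{Meas}^d_+(\Gamma)$ with the subspace weak* topology, is compact.
   Context: $\Gamma$ is a compact connected metric graph. $R(\Gamma)$ is the group of continuous piecewise affine functions $\Gamma\to\mathbb{R}$ with integer slopes. $\operatorname{Div}(\Gamma)$ is the free abelian group on the points of $\Gamma$; $D$ is effective if all coefficients are $\ge 0$. For a continuous piecewise affine $f$, $\Delta(f)=\sum_{p}\sigma_p(f)(p)$, where $-\sigma_p(f)$ is the sum of outgoing slopes of $f$ at $p$. $D\sim D'$ if $D-D'=\Delta(f)$ for some $f\in R(\Gamma)$, and $|D|=\{E\in\operatorname{Div}(\Gamma): E\ge 0,\ E\sim D\}$. $\operatorname{Meas}^d_+(\Gamma)$ is the space of nonnegative Borel measures on $\Gamma$ of total mass $d$, with the weak* topology. *)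

From Stdlib Require Import Reals List ZArith.
Open Scope R_scope.

(** A (model of a) metric graph: vertices 0..nV-1, edges e < length edges,
    edge e = (source, target, length). Loops and multi-edges allowed.
    The metric graph Gamma is the space obtained by gluing the segments
    [0, elen e] along the vertices. *)
Record MGraph := mkMGraph { nV : nat; edges : list (nat * nat * R) }.

Definition nE (G : MGraph) : nat := length (edges G).
Definition esrc (G : MGraph) (e : nat) : nat := fst (fst (nth e (edges G) (0%nat, 0%nat, 1))).
Definition etgt (G : MGraph) (e : nat) : nat := snd (fst (nth e (edges G) (0%nat, 0%nat, 1))).
Definition elen (G : MGraph) (e : nat) : R := snd (nth e (edges G) (0%nat, 0%nat, 1)).

Inductive reach (G : MGraph) (u : nat) : nat -> Prop :=
| reach_refl : reach G u u
| reach_step : forall w x e, reach G u w -> (e < nE G)%nat ->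
    ((esrc G e = w /\ etgt G e = x) \/ (etgt G e = w /\ esrc G e = x)) ->
    reach G u x.

Definition compact_connected_metric_graph (G : MGraph) : Prop :=
  (0 < nV G)%nat /\
  (forall e, (e < nE G)%nat ->
     (esrc G e < nV G)%nat /\ (etgt G e < nV G)%nat /\ 0 < elen G e) /\
  (forall u v, (u < nV G)%nat -> (v < nV G)%nat -> reach G u v).

(** Points of Gamma: a vertex, or an interior point at distance t from the
    source along edge e (0 < t < elen e). *)
Inductive Point : Type :=
| Vtx (v : nat)
| Int (e : nat) (t : R).

Definition valid_pt (G : MGraph) (p : Point) : Prop :=
  match p with
  | Vtx v => (v < nV G)%nat
  | Int e t => (e < nE G)%nat /\ 0 < t < elen G e
  end.

Definition edge_fun (G : MGraph) (f : Point -> R) (e : nat) (t : R) : R :=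
  if Rle_dec t 0 then f (Vtx (esrc G e))
  else if Rle_dec (elen G e) t then f (Vtx (etgt G e))
  else f (Int e t).

Definition Div := Point -> Z.

Definition is_divisor (G : MGraph) (D : Div) : Prop :=
  (forall p, ~ valid_pt G p -> D p = 0%Z) /\
  exists l : list Point, forall p, D p <> 0%Z -> In p l.

Definition effective (D : Div) : Prop := forall p, (0 <= D p)%Z.

Definition has_degree (D : Div) (d : Z) : Prop :=
  exists l : list Point, NoDup l /\ (forall p, D p <> 0%Z -> In p l) /\
    fold_right Z.add 0%Z (map D l) = d.

Definition rational_fun (G : MGraph) (f : Point -> R) : Prop :=
  forall e, (e < nE G)%nat ->
    exists l : list R, (2 <= length l)%nat /\ nth 0 l 0 = 0 /\
      nth (length l - 1) l 0 = elen G e /\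
      forall i, (S i < length l)%nat ->
        nth i l 0 < nth (S i) l 0 /\
        exists (m : Z) (c : R), forall t, nth i l 0 <= t <= nth (S i) l 0 ->
          edge_fun G f e t = c + IZR m * t.

Definition rslope (g : R -> R) (t s : R) : Prop :=
  exists delta, 0 < delta /\ forall h, 0 < h < delta -> g (t + h) = g t + s * h.
Definition lslope (g : R -> R) (t s : R) : Prop :=
  exists delta, 0 < delta /\ forall h, 0 < h < delta -> g (t - h) = g t - s * h.

Fixpoint sumZ_upto (n : nat) (F : nat -> Z) : Z :=
  match n with O => 0%Z | S k => (sumZ_upto k F + F k)%Z end.

(** L = Delta(f): L p = sigma_p(f) = - (sum of outgoing slopes of f at p). *)
Definition is_laplacian (G : MGraph) (f : Point -> R) (L : Div) : Prop :=
  (forall p, ~ valid_pt G p -> L p = 0%Z) /\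
  (forall e t, (e < nE G)%nat -> 0 < t < elen G e ->
     exists sl sr : Z, lslope (edge_fun G f e) t (IZR sl) /\
       rslope (edge_fun G f e) t (IZR sr) /\
       L (Int e t) = (sl - sr)%Z) /\
  (forall v, (v < nV G)%nat ->
     exists rs ls : nat -> Z,
       (forall e, (e < nE G)%nat ->
          rslope (edge_fun G f e) 0 (IZR (rs e)) /\
          lslope (edge_fun G f e) (elen G e) (IZR (ls e))) /\
       L (Vtx v) = (- sumZ_upto (nE G) (fun e =>
          ((if Nat.eqb (esrc G e) v then rs e else 0) +
           (if Nat.eqb (etgt G e) v then - ls e else 0))%Z))%Z).

Definition lin_equiv (G : MGraph) (D D' : Div) : Prop :=
  exists (f : Point -> R) (L : Div), rational_fun G f /\ is_laplacian G f L /\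
    forall p, valid_pt G p -> (D p - D' p)%Z = L p.

Definition linear_system (G : MGraph) (D : Div) (E : Div) : Prop :=
  is_divisor G E /\ effective E /\ lin_equiv G E D.

Definition cont_on_graph (G : MGraph) (phi : Point -> R) : Prop :=
  forall e, (e < nE G)%nat -> continuity (edge_fun G phi e).

(** integral of phi against the measure sum_p E(p) delta_p *)
Definition pairing (E : Div) (phi : Point -> R) (r : R) : Prop :=
  exists l : list Point, NoDup l /\ (forall p, E p <> 0%Z -> In p l) /\
    r = fold_right Rplus 0 (map (fun p => IZR (E p) * phi p) l).

Definition weak_nbhd (K : Div -> Prop) (E0 : Div) (phis : list (Point -> R))
  (eps : R) (E : Div) : Prop :=
  K E /\ forall phi, In phi phis -> forall r r0,
    pairing E phi r -> pairing E0 phi r0 -> Rabs (r - r0) < eps.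

(** open subsets of K for the subspace weak* topology *)
Definition open_in (G : MGraph) (K : Div -> Prop) (U : Div -> Prop) : Prop :=
  (forall E, U E -> K E) /\
  forall E0, U E0 -> exists (phis : list (Point -> R)) (eps : R),
    Forall (cont_on_graph G) phis /\ 0 < eps /\
    forall E, weak_nbhd K E0 phis eps E -> U E.

Definition compact_in (G : MGraph) (K : Div -> Prop) : Prop :=
  forall (I : Type) (U : I -> Div -> Prop),
    (forall i, open_in G K (U i)) ->
    (forall E, K E -> exists i, U i E) ->
    exists l : list I, forall E, K E -> exists i, In i l /\ U i E.

From Stdlib Require Import Reals List ZArith Lra Lia Classical Permutation FunctionalExtensionality IndefiniteDescription.
Open Scope R_scope.

(* Every E in |D| is D + Δf with f in R(Γ).  On each edge, f is described by
   a profile: the list of its pieces (integer slope, right breakpoint).  Testing E against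
   monotone clamped functions of f bounds every slope by d (slope_bound).
   After merging neighbouring pieces of equal slope, every inner breakpoint
   is a point of supp E or supp D, so 2d+1 pieces suffice on each edge, and
   the values of f at the vertices are bounded along paths.  Hence |D| is
   the image under divisor_of of the admissible points of a compact box of
   parameters (vertex values, breakpoints, slopes): param_surjective and
   param_in_system.  The map divisor_of is continuous into the weak*
   topology (param_continuous), the admissible points are relatively closed
   in the box (not_admissible_open, using bump test functions), and
   compact_transfer turns these facts, together with Heine-Borel for boxes
   (box_cover, from MathComp-Analysis), into compactness of |D|. *)

Definition pt (G : MGraph) (e : nat) (t : R) : Point :=
  if Rle_dec t 0 then Vtx (esrc G e)
  else if Rle_dec (elen G e) t then Vtx (etgt G e)
  else Int e t.

Lemma edge_fun_pt G f e t : edge_fun G f e t = f (pt G e t).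
Proof. unfold edge_fun, pt. destruct (Rle_dec t 0); [reflexivity|].
destruct (Rle_dec (elen G e) t); reflexivity. Qed.

Definition Point_eq_dec (p q : Point) : {p = q} + {p <> q}.
Proof. decide equality; try apply Nat.eq_dec; apply Req_EM_T. Defined.

Definition dirac (q p : Point) : Z := if Point_eq_dec q p then 1%Z else 0%Z.

Definition clamp (a b t : R) : R := Rmax a (Rmin b t).

Lemma clamp_in a b t : a <= t <= b -> clamp a b t = t.
Proof. intros; unfold clamp, Rmin, Rmax; repeat destruct Rle_dec; lra. Qed.
Lemma clamp_lo a b t : a <= b -> t <= a -> clamp a b t = a.
Proof. intros; unfold clamp, Rmin, Rmax; repeat destruct Rle_dec; lra. Qed.
Lemma clamp_hi a b t : a <= b -> b <= t -> clamp a b t = b.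
Proof. intros; unfold clamp, Rmin, Rmax; repeat destruct Rle_dec; lra. Qed.
Lemma clamp_range a b t : a <= b -> a <= clamp a b t <= b.
Proof. intros; unfold clamp, Rmin, Rmax; repeat destruct Rle_dec; lra. Qed.
Lemma clamp_mono a b x y : a <= b -> x <= y -> clamp a b x <= clamp a b y.
Proof. intros; unfold clamp, Rmin, Rmax; repeat destruct Rle_dec; lra. Qed.
Lemma clamp_add a b c t : a <= b -> b <= c ->
  (clamp a b t - a) + (clamp b c t - b) = clamp a c t - a.
Proof. intros; unfold clamp, Rmin, Rmax; repeat destruct Rle_dec; lra. Qed.

(* A profile starting at a is a list of pieces (s, b): slope
   s up to the breakpoint b.  prof_val a L t is the value at t of the
   continuous piecewise linear function vanishing at a with these pieces;
   rslope_prof and lslope_prof are its one-sided slopes, and edge_contrib is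
   the divisor of kinks it contributes to the Laplacian on edge e. *)
Fixpoint prof_val (a : R) (L : list (Z * R)) (t : R) : R :=
  match L with nil => 0 | (s, b) :: r => IZR s * (clamp a b t - a) + prof_val b r t end.
Fixpoint sorted_prof (a : R) (L : list (Z * R)) : Prop :=
  match L with nil => True | (s, b) :: r => a <= b /\ sorted_prof b r end.
Fixpoint last_break (a : R) (L : list (Z * R)) : R :=
  match L with nil => a | (_, b) :: r => last_break b r end.
Fixpoint rslope_prof (a : R) (L : list (Z * R)) (t : R) : Z :=
  match L with nil => 0%Z | (s, b) :: r =>
    ((if Rle_dec a t then if Rlt_dec t b then s else 0 else 0) + rslope_prof b r t)%Z end.
Fixpoint lslope_prof (a : R) (L : list (Z * R)) (t : R) : Z :=
  match L with nil => 0%Z | (s, b) :: r =>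
    ((if Rlt_dec a t then if Rle_dec t b then s else 0 else 0) + lslope_prof b r t)%Z end.
Fixpoint edge_contrib (G : MGraph) (e : nat) (a : R) (L : list (Z * R)) (p : Point) : Z :=
  match L with nil => 0%Z | (s, b) :: r =>
    (s * (dirac (pt G e b) p - dirac (pt G e a) p) + edge_contrib G e b r p)%Z end.

Lemma rslope_unique g t s1 s2 : rslope g t s1 -> rslope g t s2 -> s1 = s2.
Proof.
intros [d1 [h1 H1]] [d2 [h2 H2]].
set (h := Rmin d1 d2 / 2).
assert (0 < h < d1 /\ 0 < h < d2) as [A B].
{ unfold h, Rmin; destruct Rle_dec; lra. }
specialize (H1 h A); specialize (H2 h B).
assert (s1 * h = s2 * h) by lra.
apply (Rmult_eq_reg_r h); lra.
Qed.

Lemma lslope_unique g t s1 s2 : lslope g t s1 -> lslope g t s2 -> s1 = s2.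
Proof.
intros [d1 [h1 H1]] [d2 [h2 H2]].
set (h := Rmin d1 d2 / 2).
assert (0 < h < d1 /\ 0 < h < d2) as [A B].
{ unfold h, Rmin; destruct Rle_dec; lra. }
specialize (H1 h A); specialize (H2 h B).
assert (s1 * h = s2 * h) by lra.
apply (Rmult_eq_reg_r h); lra.
Qed.

Lemma rslope_plus g k t s1 s2 : rslope g t s1 -> rslope k t s2 ->
  rslope (fun u => g u + k u) t (s1 + s2).
Proof.
intros [d1 [h1 H1]] [d2 [h2 H2]]. exists (Rmin d1 d2). split.
{ unfold Rmin; destruct Rle_dec; lra. }
intros h Hh. assert (h < d1 /\ h < d2) as [A B] by (unfold Rmin in Hh; destruct Rle_dec; lra).
rewrite H1, H2 by lra. ring.
Qed.

Lemma lslope_plus g k t s1 s2 : lslope g t s1 -> lslope k t s2 ->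
  lslope (fun u => g u + k u) t (s1 + s2).
Proof.
intros [d1 [h1 H1]] [d2 [h2 H2]]. exists (Rmin d1 d2). split.
{ unfold Rmin; destruct Rle_dec; lra. }
intros h Hh. assert (h < d1 /\ h < d2) as [A B] by (unfold Rmin in Hh; destruct Rle_dec; lra).
rewrite H1, H2 by lra. ring.
Qed.

Lemma rslope_ext g k t s eps : 0 < eps -> (forall u, t <= u < t + eps -> g u = k u) ->
  rslope k t s -> rslope g t s.
Proof.
intros he E [d [hd H]]. exists (Rmin d eps). split.
{ unfold Rmin; destruct Rle_dec; lra. }
intros h Hh. assert (h < d /\ h < eps) as [A B] by (unfold Rmin in Hh; destruct Rle_dec; lra).
rewrite !E by lra. apply H; lra.
Qed.

Lemma lslope_ext g k t s eps : 0 < eps -> (forall u, t - eps < u <= t -> g u = k u) ->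
  lslope k t s -> lslope g t s.
Proof.
intros he E [d [hd H]]. exists (Rmin d eps). split.
{ unfold Rmin; destruct Rle_dec; lra. }
intros h Hh. assert (h < d /\ h < eps) as [A B] by (unfold Rmin in Hh; destruct Rle_dec; lra).
rewrite !E by lra. apply H; lra.
Qed.

Lemma clamp_rslope a b t : a <= b ->
  rslope (fun u => clamp a b u) t (if Rle_dec a t then if Rlt_dec t b then 1 else 0 else 0).
Proof.
intros hab. destruct (Rle_dec a t) as [h1|h1].
- destruct (Rlt_dec t b) as [h2|h2].
  + exists (b - t); split; [lra|]. intros h Hh. rewrite !clamp_in by lra. ring.
  + exists 1; split; [lra|]. intros h Hh. rewrite !clamp_hi by lra. ring.
- exists (a - t); split; [lra|]. intros h Hh. rewrite !clamp_lo by lra. ring.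
Qed.

Lemma clamp_lslope a b t : a <= b ->
  lslope (fun u => clamp a b u) t (if Rlt_dec a t then if Rle_dec t b then 1 else 0 else 0).
Proof.
intros hab. destruct (Rlt_dec a t) as [h1|h1].
- destruct (Rle_dec t b) as [h2|h2].
  + exists (t - a); split; [lra|]. intros h Hh. rewrite !clamp_in by lra. ring.
  + exists (t - b); split; [lra|]. intros h Hh. rewrite !clamp_hi by lra. ring.
- exists 1; split; [lra|]. intros h Hh. rewrite !clamp_lo by lra. ring.
Qed.

Lemma rslope_scal_shift g t s c a : rslope g t s -> rslope (fun u => c * (g u - a)) t (c * s).
Proof. intros [d [hd H]]. exists d; split; auto. intros h Hh. rewrite H by auto. ring. Qed.
Lemma lslope_scal_shift g t s c a : lslope g t s -> lslope (fun u => c * (g u - a)) t (c * s).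
Proof. intros [d [hd H]]. exists d; split; auto. intros h Hh. rewrite H by auto. ring. Qed.
Lemma rslope_const c t : rslope (fun _ => c) t 0.
Proof. exists 1; split; [lra|]. intros; ring. Qed.
Lemma lslope_const c t : lslope (fun _ => c) t 0.
Proof. exists 1; split; [lra|]. intros; ring. Qed.
Lemma rslope_eqs g t s s' : s = s' -> rslope g t s -> rslope g t s'.
Proof. intros ->; auto. Qed.
Lemma lslope_eqs g t s s' : s = s' -> lslope g t s -> lslope g t s'.
Proof. intros ->; auto. Qed.

Lemma prof_val_rslope a L t : sorted_prof a L -> rslope (prof_val a L) t (IZR (rslope_prof a L t)).
Proof.
revert a; induction L as [|[s b] r IH]; intros a HS; simpl.
- apply rslope_const.
- destruct HS as [hab HS].
  eapply rslope_eqs; [|apply rslope_plus; [apply rslope_scal_shift, (clamp_rslope a b t hab)| apply IH, HS]].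
  rewrite plus_IZR. f_equal. repeat destruct Rle_dec; repeat destruct Rlt_dec; simpl; ring.
Qed.

Lemma prof_val_lslope a L t : sorted_prof a L -> lslope (prof_val a L) t (IZR (lslope_prof a L t)).
Proof.
revert a; induction L as [|[s b] r IH]; intros a HS; simpl.
- apply lslope_const.
- destruct HS as [hab HS].
  eapply lslope_eqs; [|apply lslope_plus; [apply lslope_scal_shift, (clamp_lslope a b t hab)| apply IH, HS]].
  rewrite plus_IZR. f_equal. repeat destruct Rle_dec; repeat destruct Rlt_dec; simpl; ring.
Qed.

Definition edges_valid (G : MGraph) : Prop :=
  forall e, (e < nE G)%nat -> (esrc G e < nV G)%nat /\ (etgt G e < nV G)%nat /\ 0 < elen G e.

Definition profiles_ok (G : MGraph) (Lp : nat -> list (Z * R)) : Prop :=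
  forall e, (e < nE G)%nat -> sorted_prof 0 (Lp e) /\ last_break 0 (Lp e) = elen G e.

Definition represents (G : MGraph) (f : Point -> R) (Lp : nat -> list (Z * R)) : Prop :=
  forall e, (e < nE G)%nat -> forall t, 0 <= t <= elen G e ->
    edge_fun G f e t = f (Vtx (esrc G e)) + prof_val 0 (Lp e) t.

Definition profile_laplacian (G : MGraph) (Lp : nat -> list (Z * R)) (p : Point) : Z :=
  sumZ_upto (nE G) (fun e => edge_contrib G e 0 (Lp e) p).

Lemma sumZ_ext n F F' : (forall k, (k < n)%nat -> F k = F' k) -> sumZ_upto n F = sumZ_upto n F'.
Proof. induction n; simpl; intros H; auto. rewrite IHn by (intros; apply H; lia). rewrite H by lia. auto. Qed.
Lemma sumZ_opp n F : sumZ_upto n (fun k => - F k)%Z = (- sumZ_upto n F)%Z.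
Proof. induction n; simpl; auto. rewrite IHn. lia. Qed.
Lemma sumZ_zero n F : (forall k, (k < n)%nat -> F k = 0%Z) -> sumZ_upto n F = 0%Z.
Proof. induction n; simpl; intros H; auto. rewrite IHn by (intros; apply H; lia). rewrite H by lia. auto. Qed.
Lemma sumZ_single n F e : (e < n)%nat -> (forall k, (k < n)%nat -> k <> e -> F k = 0%Z) ->
  sumZ_upto n F = F e.
Proof.
induction n; simpl; intros He H; [lia|].
destruct (Nat.eq_dec n e) as [->|ne].
- rewrite sumZ_zero; [lia|]. intros k hk; apply H; lia.
- rewrite IHn by (try lia; intros; apply H; lia). rewrite (H n) by lia. lia.
Qed.

Lemma sorted_prof_bounds a L : sorted_prof a L -> a <= last_break a L /\
  forall s b, In (s, b) L -> a <= b <= last_break a L.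
Proof.
revert a; induction L as [|[s b] r IH]; simpl; intros a HS.
- split; [lra| tauto].
- destruct HS as [hab HS]. destruct (IH b HS) as [h1 h2]. split; [lra|].
  intros s' b' [E|E]; [inversion E; subst; lra|]. specialize (h2 s' b' E); lra.
Qed.

Lemma dirac_pt_int G e0 t u : 0 < t < elen G e0 ->
  dirac (pt G e0 u) (Int e0 t) = if Req_EM_T u t then 1%Z else 0%Z.
Proof.
intros Ht. unfold dirac, pt.
destruct (Rle_dec u 0); [destruct Point_eq_dec; [discriminate|]; destruct Req_EM_T; [lra|auto]|].
destruct (Rle_dec (elen G e0) u); [destruct Point_eq_dec; [discriminate|]; destruct Req_EM_T; [lra|auto]|].
destruct Point_eq_dec as [E|E]; destruct Req_EM_T as [E'|E']; auto.
- inversion E; congruence.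
- subst; congruence.
Qed.

Lemma dirac_pt_int_other G e e0 t u : e <> e0 -> dirac (pt G e u) (Int e0 t) = 0%Z.
Proof.
intros ne. unfold dirac, pt.
repeat destruct Rle_dec; destruct Point_eq_dec as [E|E]; auto; inversion E; congruence.
Qed.

Lemma edge_contrib_other G e e0 a L t : e <> e0 -> edge_contrib G e a L (Int e0 t) = 0%Z.
Proof. intros ne.
revert a; induction L as [|[s b] r IH]; simpl; intros a; auto.
rewrite IH. rewrite (dirac_pt_int_other G e e0 t b ne), (dirac_pt_int_other G e e0 t a ne). lia.
Qed.

Lemma edge_contrib_int G e a L t : 0 < t < elen G e -> sorted_prof a L ->
  edge_contrib G e a L (Int e t) = (lslope_prof a L t - rslope_prof a L t)%Z.
Proof.
intros Ht. revert a; induction L as [|[s b] r IH]; simpl; intros a HS; auto.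
destruct HS as [hab HS]. rewrite IH by auto. rewrite !dirac_pt_int by auto.
repeat destruct Req_EM_T; repeat destruct Rle_dec; repeat destruct Rlt_dec; try lra; subst; lia.
Qed.

Lemma dirac_pt_vtx G e u v : 0 <= u <= elen G e -> 0 < elen G e ->
  dirac (pt G e u) (Vtx v) =
  ((if Rle_dec u 0 then if Nat.eq_dec (esrc G e) v then 1 else 0 else 0) +
   (if Rle_dec (elen G e) u then if Nat.eq_dec (etgt G e) v then 1 else 0 else 0))%Z.
Proof.
intros Hu Hl. unfold dirac, pt.
destruct (Rle_dec u 0); destruct (Rle_dec (elen G e) u); try lra;
destruct Point_eq_dec as [E|E]; repeat destruct Nat.eq_dec; try (inversion E; congruence); subst; auto; congruence.
Qed.

Lemma edge_contrib_vtx G e a L v : 0 <= a -> sorted_prof a L -> last_break a L <= elen G e -> 0 < elen G e ->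
  edge_contrib G e a L (Vtx v) =
  ((if Nat.eq_dec (esrc G e) v then - rslope_prof a L 0 else 0) +
   (if Nat.eq_dec (etgt G e) v then lslope_prof a L (elen G e) else 0))%Z.
Proof.
intros H0. revert a H0; induction L as [|[s b] r IH]; simpl; intros a H0 HS Hl Hpos.
- repeat destruct Nat.eq_dec; auto.
- destruct HS as [hab HS].
  pose proof (proj1 (sorted_prof_bounds b r HS)).
  rewrite IH by (auto; lra). rewrite !dirac_pt_vtx by lra.
  repeat destruct Nat.eq_dec; repeat destruct Rle_dec; repeat destruct Rlt_dec; try lra; lia.
Qed.

Lemma pt_valid G e u : edges_valid G -> (e < nE G)%nat -> valid_pt G (pt G e u).
Proof.
intros HG He. destruct (HG e He) as [h1 [h2 h3]]. unfold pt.
repeat destruct Rle_dec; simpl; auto. split; [auto|lra].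
Qed.

Lemma edge_contrib_invalid G e a L p : edges_valid G -> (e < nE G)%nat -> ~ valid_pt G p -> edge_contrib G e a L p = 0%Z.
Proof.
intros HG He Hp. revert a; induction L as [|[s b] r IH]; simpl; intros a; auto.
rewrite IH. unfold dirac. destruct Point_eq_dec as [E1|E1]; [subst; exfalso; apply Hp, pt_valid; auto|].
destruct Point_eq_dec as [E2|E2]; [subst; exfalso; apply Hp, pt_valid; auto|]. lia.
Qed.

Lemma represents_rslope G f Lp e t : represents G f Lp -> profiles_ok G Lp -> edges_valid G -> (e < nE G)%nat ->
  0 <= t < elen G e -> rslope (edge_fun G f e) t (IZR (rslope_prof 0 (Lp e) t)).
Proof.
intros Hr Hp HG He Ht. destruct (Hp e He) as [HS HL].
apply (rslope_ext _ (fun u => f (Vtx (esrc G e)) + prof_val 0 (Lp e) u) _ _ (elen G e - t)); [lra| |].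
- intros u Hu; apply Hr; auto; lra.
- eapply rslope_eqs; [|apply rslope_plus; [apply rslope_const|apply prof_val_rslope, HS]]. ring.
Qed.

Lemma represents_lslope G f Lp e t : represents G f Lp -> profiles_ok G Lp -> edges_valid G -> (e < nE G)%nat ->
  0 < t <= elen G e -> lslope (edge_fun G f e) t (IZR (lslope_prof 0 (Lp e) t)).
Proof.
intros Hr Hp HG He Ht. destruct (Hp e He) as [HS HL].
apply (lslope_ext _ (fun u => f (Vtx (esrc G e)) + prof_val 0 (Lp e) u) _ _ t); [lra| |].
- intros u Hu; apply Hr; auto; lra.
- eapply lslope_eqs; [|apply lslope_plus; [apply lslope_const|apply prof_val_lslope, HS]]. ring.
Qed.

Lemma laplacian_int G Lp e t : profiles_ok G Lp -> (e < nE G)%nat -> 0 < t < elen G e ->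
  profile_laplacian G Lp (Int e t) = (lslope_prof 0 (Lp e) t - rslope_prof 0 (Lp e) t)%Z.
Proof.
intros Hp He Ht. unfold profile_laplacian. rewrite (sumZ_single _ _ e He).
- apply edge_contrib_int; auto. apply Hp; auto.
- intros k hk ne. apply edge_contrib_other; auto.
Qed.

Lemma laplacian_vtx G Lp v : profiles_ok G Lp -> edges_valid G ->
  profile_laplacian G Lp (Vtx v) = (- sumZ_upto (nE G) (fun e =>
          ((if Nat.eqb (esrc G e) v then rslope_prof 0 (Lp e) 0 else 0) +
           (if Nat.eqb (etgt G e) v then - lslope_prof 0 (Lp e) (elen G e) else 0))%Z))%Z.
Proof.
intros Hp HG. unfold profile_laplacian. rewrite <- sumZ_opp. apply sumZ_ext. intros e He.
destruct (Hp e He) as [HS HL]. destruct (HG e He) as [_ [_ hl]].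
rewrite edge_contrib_vtx by (auto; lra).
destruct (Nat.eq_dec (esrc G e) v) as [E1|E1]; destruct (Nat.eq_dec (etgt G e) v) as [E2|E2];
[apply Nat.eqb_eq in E1, E2 | apply Nat.eqb_eq in E1; apply Nat.eqb_neq in E2
|apply Nat.eqb_neq in E1; apply Nat.eqb_eq in E2|apply Nat.eqb_neq in E1, E2]; rewrite E1, E2; lia.
Qed.

Lemma profile_laplacian_spec G f Lp : represents G f Lp -> profiles_ok G Lp -> edges_valid G ->
  is_laplacian G f (profile_laplacian G Lp).
Proof.
intros Hr Hp HG. split; [|split].
- intros p Hv. unfold profile_laplacian. apply sumZ_zero. intros e He. apply edge_contrib_invalid; auto.
- intros e t He Ht. exists (lslope_prof 0 (Lp e) t), (rslope_prof 0 (Lp e) t). split; [|split].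
  + apply represents_lslope; auto; lra.
  + apply represents_rslope; auto; lra.
  + apply laplacian_int; auto.
- intros v Hv. exists (fun e => rslope_prof 0 (Lp e) 0), (fun e => lslope_prof 0 (Lp e) (elen G e)). split.
  + intros e He. destruct (HG e He) as [_ [_ hl]]. split.
    * apply represents_rslope; auto; lra.
    * apply represents_lslope; auto; lra.
  + apply laplacian_vtx; auto.
Qed.

Lemma laplacian_unique G f Lp L : represents G f Lp -> profiles_ok G Lp -> edges_valid G ->
  is_laplacian G f L -> forall p, valid_pt G p -> L p = profile_laplacian G Lp p.
Proof.
intros Hr Hp HG [_ [Hint Hvtx]] p Hv. destruct p as [v|e t]; simpl in Hv.
- destruct (Hvtx v Hv) as [rs [ls [Hsl ->]]]. rewrite laplacian_vtx by auto. f_equal.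
  apply sumZ_ext. intros e He. destruct (Hsl e He) as [h1 h2]. destruct (HG e He) as [_ [_ hl]].
  assert (rs e = rslope_prof 0 (Lp e) 0) as ->.
  { apply eq_IZR. eapply rslope_unique; [apply h1|apply represents_rslope; auto; lra]. }
  assert (ls e = lslope_prof 0 (Lp e) (elen G e)) as ->.
  { apply eq_IZR. eapply lslope_unique; [apply h2|apply represents_lslope; auto; lra]. }
  reflexivity.
- destruct Hv as [He Ht]. destruct (Hint e t He Ht) as [sl [sr [h1 [h2 ->]]]].
  rewrite laplacian_int by auto.
  assert (sl = lslope_prof 0 (Lp e) t) as ->.
  { apply eq_IZR. eapply lslope_unique; [apply h1|apply represents_lslope; auto; lra]. }
  assert (sr = rslope_prof 0 (Lp e) t) as ->.
  { apply eq_IZR. eapply rslope_unique; [apply h2|apply represents_rslope; auto; lra]. }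
  reflexivity.
Qed.

Definition sum_pts (l : list Point) (F : Point -> R) : R := fold_right Rplus 0 (map F l).

Fixpoint sum_nat (n : nat) (F : nat -> R) : R :=
  match n with O => 0 | S k => sum_nat k F + F k end.

Lemma sum_pts_cons p l F : sum_pts (p :: l) F = F p + sum_pts l F.
Proof. reflexivity. Qed.
Lemma sum_pts_perm l1 l2 F : Permutation l1 l2 -> sum_pts l1 F = sum_pts l2 F.
Proof. intros P; induction P; unfold sum_pts in *; simpl; try lra. Qed.
Lemma sum_pts_ext l F F' : (forall p, In p l -> F p = F' p) -> sum_pts l F = sum_pts l F'.
Proof. induction l; simpl; intros H; auto. unfold sum_pts in *; simpl. rewrite H, IHl; auto. Qed.
Lemma sum_pts_plus l F F' : sum_pts l (fun p => F p + F' p) = sum_pts l F + sum_pts l F'.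
Proof. induction l; unfold sum_pts in *; simpl; [ring|]. rewrite IHl. ring. Qed.
Lemma sum_pts_scal l c F : sum_pts l (fun p => c * F p) = c * sum_pts l F.
Proof. induction l; unfold sum_pts in *; simpl; [ring|]. rewrite IHl. ring. Qed.
Lemma sum_pts_zero l F : (forall p, In p l -> F p = 0) -> sum_pts l F = 0.
Proof. induction l; simpl; intros H; auto. unfold sum_pts in *; simpl. rewrite H, IHl; auto. ring. Qed.

Definition nonzero_at (F : Point -> R) (p : Point) : bool := if Req_EM_T (F p) 0 then false else true.

Lemma sum_pts_filter l F : sum_pts l F = sum_pts (filter (nonzero_at F) l) F.
Proof.
induction l; simpl; auto. unfold nonzero_at at 1. destruct Req_EM_T as [E|E]; unfold sum_pts in *; simpl.
- rewrite E, IHl. ring.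
- rewrite IHl. auto.
Qed.

Lemma sum_pts_indep l1 l2 F : NoDup l1 -> NoDup l2 -> (forall p, F p <> 0 -> In p l1) ->
  (forall p, F p <> 0 -> In p l2) -> sum_pts l1 F = sum_pts l2 F.
Proof.
intros N1 N2 H1 H2. rewrite (sum_pts_filter l1), (sum_pts_filter l2). apply sum_pts_perm.
apply NoDup_Permutation; try (apply NoDup_filter; auto).
intros p. rewrite !filter_In. unfold nonzero_at. destruct Req_EM_T; split; intros [A B]; try discriminate; split; auto.
Qed.

Lemma sum_pts_dirac l b phi : NoDup l ->
  sum_pts l (fun p => IZR (dirac b p) * phi p) = if in_dec Point_eq_dec b l then phi b else 0.
Proof.
induction l as [|a l IH]; simpl; intros N; auto.
inversion N as [|? ? Na Nl]; subst. unfold sum_pts in *; simpl. rewrite IH by auto.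
unfold dirac at 1. destruct Point_eq_dec as [<-|ne].
- destruct (in_dec Point_eq_dec b l); [contradiction|]. destruct Point_eq_dec; [|congruence]. ring.
- destruct (in_dec Point_eq_dec b l); destruct Point_eq_dec; try congruence; ring.
Qed.

Lemma sum_pts_sum_nat l n F : sum_pts l (fun p => sum_nat n (fun k => F k p)) = sum_nat n (fun k => sum_pts l (F k)).
Proof.
induction n; simpl.
- apply sum_pts_zero; auto.
- rewrite sum_pts_plus, IHn. auto.
Qed.

Lemma IZR_sumZ n F : IZR (sumZ_upto n F) = sum_nat n (fun k => IZR (F k)).
Proof. induction n; simpl; auto. rewrite plus_IZR, IHn. auto. Qed.

Lemma sum_nat_ext n F F' : (forall k, (k < n)%nat -> F k = F' k) -> sum_nat n F = sum_nat n F'.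
Proof. induction n; simpl; intros H; auto. rewrite IHn, H by (auto; lia). auto. Qed.
Lemma sum_nat_zero n F : (forall k, (k < n)%nat -> F k = 0) -> sum_nat n F = 0.
Proof. induction n; simpl; intros H; auto. rewrite IHn, H by (auto; lia). ring. Qed.

Lemma sum_nat_ge_term n F k : (forall j, (j < n)%nat -> 0 <= F j) -> (k < n)%nat -> F k <= sum_nat n F.
Proof.
induction n; simpl; intros H Hk; [lia|].
assert (0 <= sum_nat n F).
{ clear IHn Hk. induction n; simpl; [lra|]. assert (0 <= F n) by (apply H; lia).
  assert (0 <= sum_nat n F) by (apply IHn; intros; apply H; lia). lra. }
destruct (Nat.eq_dec k n) as [->|ne].
- lra.
- assert (F k <= sum_nat n F) by (apply IHn; auto; lia). assert (0 <= F n) by (apply H; lia). lra.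
Qed.

Lemma sum_pts_le l F F' : (forall p, In p l -> F p <= F' p) -> sum_pts l F <= sum_pts l F'.
Proof.
induction l; intros H; unfold sum_pts in *; simpl; [lra|].
assert (F a <= F' a) by (apply H; simpl; auto).
assert (fold_right Rplus 0 (map F l) <= fold_right Rplus 0 (map F' l)) by (apply IHl; intros; apply H; simpl; auto).
lra.
Qed.

Lemma sum_pts_Z l (D : Div) : sum_pts l (fun p => IZR (D p) * 1) = IZR (fold_right Z.add 0%Z (map D l)).
Proof. induction l; unfold sum_pts in *; simpl; auto. rewrite IHl, plus_IZR. ring. Qed.

Lemma nodup_support (E : Div) : (exists l, forall p, E p <> 0%Z -> In p l) ->
  exists l, NoDup l /\ forall p, E p <> 0%Z -> In p l.
Proof.
intros [l Hl]. exists (nodup Point_eq_dec l). split; [apply NoDup_nodup|]. intros p Hp. apply nodup_In; auto.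
Qed.

Fixpoint edge_pairing (G : MGraph) (e : nat) (a : R) (L : list (Z * R)) (phi : Point -> R) : R :=
  match L with nil => 0 | (s, b) :: r =>
    IZR s * (phi (pt G e b) - phi (pt G e a)) + edge_pairing G e b r phi end.

Fixpoint profile_points (G : MGraph) (e : nat) (a : R) (L : list (Z * R)) : list Point :=
  match L with nil => pt G e a :: nil | (s, b) :: r => pt G e a :: profile_points G e b r end.

Lemma sum_pts_contrib G e a L l phi : NoDup l -> (forall q, In q (profile_points G e a L) -> In q l) ->
  sum_pts l (fun p => IZR (edge_contrib G e a L p) * phi p) = edge_pairing G e a L phi.
Proof.
intros N. revert a; induction L as [|[s b] r IH]; simpl; intros a Hin.
- apply sum_pts_zero. intros; ring.
- rewrite <- IH by (intros q Hq; apply Hin; destruct r as [|[? ?] ?]; simpl in *; tauto).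
  transitivity (sum_pts l (fun p => IZR s * (IZR (dirac (pt G e b) p) * phi p) +
     (- (IZR s * (IZR (dirac (pt G e a) p) * phi p)) + IZR (edge_contrib G e b r p) * phi p))).
  { apply sum_pts_ext; intros; rewrite plus_IZR, mult_IZR, minus_IZR. ring. }
  rewrite !sum_pts_plus. rewrite (sum_pts_ext l (fun p => - _) (fun p => (-1) * (IZR s * (IZR (dirac (pt G e a) p) * phi p)))) by (intros; ring).
  rewrite !sum_pts_scal, !sum_pts_dirac by auto.
  assert (In (pt G e a) l) by (apply Hin; simpl; auto).
  assert (In (pt G e b) l) by (apply Hin; destruct r as [|[? ?] ?]; simpl; auto).
  destruct (in_dec Point_eq_dec (pt G e b) l); [|contradiction].
  destruct (in_dec Point_eq_dec (pt G e a) l); [|contradiction]. ring.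
Qed.

Definition profile_points_all (G : MGraph) (Lp : nat -> list (Z * R)) : list Point :=
  flat_map (fun e => profile_points G e 0 (Lp e)) (seq 0 (nE G)).

Lemma edge_contrib_nz_in G e a L p : edge_contrib G e a L p <> 0%Z -> In p (profile_points G e a L).
Proof.
revert a; induction L as [|[s b] r IH]; simpl; intros a H; [lia|].
destruct (Point_eq_dec (pt G e a) p) as [E|E]; [left; auto|right].
unfold dirac at 2 in H. destruct Point_eq_dec; [contradiction|].
destruct (Z.eq_dec (edge_contrib G e b r p) 0) as [E2|E2]; [|apply IH; auto].
unfold dirac in H. destruct Point_eq_dec as [E3|E3]; [|lia].
destruct r as [|[? ?] ?]; simpl; auto.
Qed.

Lemma laplacian_nz_in G Lp p : profile_laplacian G Lp p <> 0%Z -> In p (profile_points_all G Lp).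
Proof.
unfold profile_laplacian, profile_points_all. generalize (nE G) as n. induction n; cbn [sumZ_upto]; intros H; [simpl in H; lia|].
rewrite seq_S, flat_map_app, in_app_iff. simpl. rewrite app_nil_r.
destruct (Z.eq_dec (edge_contrib G n 0 (Lp n) p) 0) as [E|E].
- left. apply IHn. lia.
- right. apply edge_contrib_nz_in; auto.
Qed.

Lemma pairing_formula G D Lp A lD l phi :
  (forall p, A p = (D p + profile_laplacian G Lp p)%Z) ->
  NoDup lD -> (forall p, D p <> 0%Z -> In p lD) ->
  NoDup l -> (forall p, A p <> 0%Z -> In p l) ->
  sum_pts l (fun p => IZR (A p) * phi p) =
  sum_pts lD (fun p => IZR (D p) * phi p) + sum_nat (nE G) (fun e => edge_pairing G e 0 (Lp e) phi).
Proof.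
intros HA NlD HD Nl Hl.
set (la := nodup Point_eq_dec (l ++ lD ++ profile_points_all G Lp)).
assert (Nla : NoDup la) by apply NoDup_nodup.
assert (Ila : forall q, In q l \/ In q lD \/ In q (profile_points_all G Lp) -> In q la).
{ intros q Hq. unfold la. rewrite nodup_In, !in_app_iff. tauto. }
assert (Hnz : forall (B : Div) p, IZR (B p) * phi p <> 0 -> B p <> 0%Z).
{ intros B p Hp E; rewrite E in Hp; apply Hp; simpl; ring. }
rewrite (sum_pts_indep l la); auto.
rewrite (sum_pts_indep lD la (fun p => IZR (D p) * phi p)); auto.
all: try (intros p Hp; first [apply HD, Hnz, Hp | apply Ila; right; left; apply HD, Hnz, Hp]).
rewrite (sum_pts_ext la _ (fun p => IZR (D p) * phi p + sum_nat (nE G) (fun e => IZR (edge_contrib G e 0 (Lp e) p) * phi p))).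
2:{ intros p _. rewrite HA, plus_IZR. unfold profile_laplacian. rewrite IZR_sumZ.
    rewrite Rmult_plus_distr_r. f_equal. clear. induction (nE G); simpl; [ring|]. rewrite <- IHn. ring. }
rewrite sum_pts_plus, sum_pts_sum_nat. f_equal. apply sum_nat_ext. intros e He.
apply sum_pts_contrib; auto. intros q Hq. apply Ila. right; right.
unfold profile_points_all. apply in_flat_map. exists e. split; auto. apply in_seq. lia.
Qed.

Fixpoint strict_prof (a : R) (L : list (Z * R)) : Prop :=
  match L with nil => True | (s, b) :: r => a < b /\ strict_prof b r end.

Lemma strict_sorted a L : strict_prof a L -> sorted_prof a L.
Proof. revert a; induction L as [|[s b] r IH]; simpl; auto. intros a [h1 h2]; split; auto; lra. Qed.

Lemma prof_val_app a L1 L2 t : prof_val a (L1 ++ L2) t = prof_val a L1 t + prof_val (last_break a L1) L2 t.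
Proof. revert a; induction L1 as [|[s b] r IH]; simpl; intros a; [ring|]. rewrite IH; ring. Qed.
Lemma last_break_app a L1 L2 : last_break a (L1 ++ L2) = last_break (last_break a L1) L2.
Proof. revert a; induction L1 as [|[s b] r IH]; simpl; auto. Qed.
Lemma sorted_prof_app a L1 L2 : sorted_prof a L1 -> sorted_prof (last_break a L1) L2 -> sorted_prof a (L1 ++ L2).
Proof. revert a; induction L1 as [|[s b] r IH]; simpl; auto. intros a [h1 h2] h3; split; auto. Qed.
Lemma strict_prof_app a L1 L2 : strict_prof a L1 -> strict_prof (last_break a L1) L2 -> strict_prof a (L1 ++ L2).
Proof. revert a; induction L1 as [|[s b] r IH]; simpl; auto. intros a [h1 h2] h3; split; auto. Qed.

Lemma prof_val_before a L u : sorted_prof a L -> u <= a -> prof_val a L u = 0.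
Proof.
revert a; induction L as [|[s b] r IH]; simpl; intros a HS Hu; auto.
destruct HS as [h1 h2]. rewrite IH by (auto; lra). rewrite clamp_lo by lra. ring.
Qed.

Lemma prof_val_after a L u : sorted_prof a L -> last_break a L <= u -> prof_val a L u = prof_val a L (last_break a L).
Proof.
revert a; induction L as [|[s b] r IH]; simpl; intros a HS Hu; auto.
destruct HS as [h1 h2]. pose proof (proj1 (sorted_prof_bounds b r h2)).
rewrite IH by (auto; lra). rewrite (clamp_hi a b u), (clamp_hi a b (last_break b r)) by lra. auto.
Qed.

Definition profile_of_pieces (l : list R) (m : nat -> Z) (k : nat) : list (Z * R) :=
  map (fun i => (m i, nth (S i) l 0)) (seq 0 k).

Lemma rational_pieces_profile G f e (l : list R) (m : nat -> Z) (c : nat -> R) :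
  nth 0 l 0 = 0 ->
  (forall i, (S i < length l)%nat -> nth i l 0 < nth (S i) l 0 /\
     forall t, nth i l 0 <= t <= nth (S i) l 0 -> edge_fun G f e t = c i + IZR (m i) * t) ->
  forall k, (k < length l)%nat ->
   strict_prof 0 (profile_of_pieces l m k) /\ last_break 0 (profile_of_pieces l m k) = nth k l 0 /\
   forall t, 0 <= t <= nth k l 0 -> edge_fun G f e t = f (Vtx (esrc G e)) + prof_val 0 (profile_of_pieces l m k) t.
Proof.
intros H0 Hp. induction k as [|k IH]; intros Hk.
- simpl. split; auto. split; auto. intros t Ht. rewrite H0 in Ht.
  assert (t = 0) as -> by lra. unfold edge_fun. destruct Rle_dec; [|lra]. simpl; ring.
- destruct IH as [IS [IL IV]]; [lia|]. destruct (Hp k Hk) as [hlt hv].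
  unfold profile_of_pieces. rewrite seq_S, map_app. fold (profile_of_pieces l m k). simpl.
  split; [|split].
  + apply strict_prof_app; auto. simpl. rewrite IL. split; auto.
  + rewrite last_break_app, IL. auto.
  + intros t Ht. rewrite prof_val_app, IL. simpl.
    destruct (Rle_dec t (nth k l 0)) as [h|h].
    * rewrite IV by lra. rewrite clamp_lo by lra. ring.
    * rewrite clamp_in by lra. rewrite hv by lra.
      rewrite prof_val_after by (try apply strict_sorted; auto; lra). rewrite IL.
      assert (E := IV (nth k l 0)).
      assert (E2 := hv (nth k l 0)).
      pose proof (strict_sorted _ _ IS) as SS. pose proof (proj1 (sorted_prof_bounds _ _ SS)). rewrite IL in H.
      rewrite E2 in E by lra. replace (c k + IZR (m k) * t) with ((c k + IZR (m k) * nth k l 0) + IZR (m k) * (t - nth k l 0)) by ring. rewrite E by lra. ring.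
Qed.

Lemma rational_profile G f e : (e < nE G)%nat -> rational_fun G f ->
  exists L, strict_prof 0 L /\ last_break 0 L = elen G e /\
   forall t, 0 <= t <= elen G e -> edge_fun G f e t = f (Vtx (esrc G e)) + prof_val 0 L t.
Proof.
intros He Hr. destruct (Hr e He) as [l [Hlen [H0 [Hlast Hp]]]].
assert (Hm : forall i, exists mc : Z * R, (S i < length l)%nat -> nth i l 0 < nth (S i) l 0 /\
   forall t, nth i l 0 <= t <= nth (S i) l 0 -> edge_fun G f e t = snd mc + IZR (fst mc) * t).
{ intros i. destruct (Nat.lt_ge_cases (S i) (length l)) as [h|h].
  - destruct (Hp i h) as [h1 [m [c Hc]]]. exists (m, c). intros _. split; auto.
  - exists (0%Z, 0). intros; lia. }
destruct (functional_choice _ Hm) as [mc Hmc].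
destruct (rational_pieces_profile G f e l (fun i => fst (mc i)) (fun i => snd (mc i)) H0 (fun i hi => Hmc i hi) (length l - 1)) as [A [B C]]; [lia|].
exists (profile_of_pieces l (fun i => fst (mc i)) (length l - 1)). rewrite B, Hlast in *. split; auto. 
Qed.

Fixpoint is_piece (a : R) (L : list (Z * R)) (a' : R) (s : Z) (b' : R) : Prop :=
  match L with nil => False | (s0, b0) :: r => (a' = a /\ s = s0 /\ b' = b0) \/ is_piece b0 r a' s b' end.

Lemma pieces_range a L a' s b' : sorted_prof a L -> is_piece a L a' s b' -> a <= a' <= b' /\ b' <= last_break a L.
Proof.
revert a; induction L as [|[s0 b0] r IH]; simpl; intros a HS Hin; [contradiction|].
destruct HS as [h1 h2]. pose proof (sorted_prof_bounds b0 r h2) as [B _].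
destruct Hin as [[-> [-> ->]]|Hin]; [lra|]. destruct (IH b0 h2 Hin); lra.
Qed.

Lemma pieces_strict a L a' s b' : strict_prof a L -> is_piece a L a' s b' -> a' < b'.
Proof.
revert a; induction L as [|[s0 b0] r IH]; simpl; intros a HS Hin; [contradiction|].
destruct HS as [h1 h2]. destruct Hin as [[-> [-> ->]]|Hin]; [lra|]. eauto.
Qed.

Lemma pieces_diff a L a' s b' : sorted_prof a L -> is_piece a L a' s b' ->
  forall u v, a' <= u <= b' -> a' <= v <= b' -> prof_val a L v - prof_val a L u = IZR s * (v - u).
Proof.
revert a; induction L as [|[s0 b0] r IH]; simpl; intros a HS Hin u v Hu Hv; [contradiction|].
destruct HS as [h1 h2]. destruct Hin as [[-> [-> ->]]|Hin].
- rewrite !(prof_val_before b0 r) by (auto; lra). rewrite !clamp_in by lra. ring.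
- destruct (pieces_range _ _ _ _ _ h2 Hin) as [r1 r2].
  pose proof (IH b0 h2 Hin u v Hu Hv) as E1. rewrite !(clamp_hi a b0) by lra. lra.
Qed.

Lemma edge_pairing_nonneg G e a L psi :
  (forall a' s b', is_piece a L a' s b' -> 0 <= IZR s * (psi (pt G e b') - psi (pt G e a'))) ->
  0 <= edge_pairing G e a L psi.
Proof.
revert a; induction L as [|[s0 b0] r IH]; simpl; intros a B; [lra|].
assert (0 <= IZR s0 * (psi (pt G e b0) - psi (pt G e a))) by (apply B; left; auto).
assert (0 <= edge_pairing G e b0 r psi) by (apply IH; intros; apply B; right; auto). lra.
Qed.

Lemma edge_pairing_ge G e a L psi a' s b' :
  (forall a'' s' b'', is_piece a L a'' s' b'' -> 0 <= IZR s' * (psi (pt G e b'') - psi (pt G e a''))) ->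
  is_piece a L a' s b' -> IZR s * (psi (pt G e b') - psi (pt G e a')) <= edge_pairing G e a L psi.
Proof.
revert a; induction L as [|[s0 b0] r IH]; simpl; intros a Hall Hin; [contradiction|].
assert (A : 0 <= IZR s0 * (psi (pt G e b0) - psi (pt G e a))) by (apply Hall; left; auto).
assert (B : forall a'' s' b'', is_piece b0 r a'' s' b'' ->
  0 <= IZR s' * (psi (pt G e b'') - psi (pt G e a''))) by (intros; apply Hall; right; auto).
assert (C := edge_pairing_nonneg G e b0 r psi B).
destruct Hin as [[-> [-> ->]]|Hin]; [lra|]. specialize (IH b0 B Hin). lra.
Qed.

Lemma edge_pairing_one G e a L : edge_pairing G e a L (fun _ => 1) = 0.
Proof. revert a; induction L as [|[s b] r IH]; simpl; intros; auto. rewrite IH; ring. Qed.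

Definition ramp (c w y : R) : R := clamp 0 1 ((y - c) / w).

Lemma ramp_mono c w x y : 0 < w -> x <= y -> ramp c w x <= ramp c w y.
Proof.
intros hw hxy. unfold ramp. apply clamp_mono; [lra|].
unfold Rdiv. apply Rmult_le_compat_r; [left; apply Rinv_0_lt_compat; auto|lra].
Qed.

(* For a nondecreasing test function, every piece of a profile contributes
   nonnegatively to the pairing: on a piece the function is affine of slope s,
   so its values move in the direction of s. *)
Lemma ramp_piece_nonneg G f Lp c w e a s b :
  represents G f Lp -> profiles_ok G Lp -> 0 < w -> (e < nE G)%nat ->
  is_piece 0 (Lp e) a s b ->
  0 <= IZR s * (ramp c w (f (pt G e b)) - ramp c w (f (pt G e a))).
Proof.
intros Hr Hp hw He Hin. destruct (Hp e He) as [HS HL].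
destruct (pieces_range _ _ _ _ _ HS Hin) as [R1 R2]. rewrite HL in R2.
rewrite <- !edge_fun_pt. rewrite !(Hr e He) by lra.
assert (Df : prof_val 0 (Lp e) b - prof_val 0 (Lp e) a = IZR s * (b - a))
  by (apply (pieces_diff _ _ _ _ _ HS Hin); lra).
set (fa := f (Vtx (esrc G e)) + prof_val 0 (Lp e) a).
set (fb := f (Vtx (esrc G e)) + prof_val 0 (Lp e) b).
destruct (Rle_dec 0 (IZR s)) as [hs|hs].
- apply Rmult_le_pos; auto.
  assert (ramp c w fa <= ramp c w fb); [|lra].
  apply ramp_mono; auto. unfold fa, fb.
  assert (IZR s * (b - a) >= 0) by (apply Rle_ge, Rmult_le_pos; lra). lra.
- replace (IZR s * _) with ((- IZR s) * (ramp c w fa - ramp c w fb)) by ring.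
  apply Rmult_le_pos; [lra|].
  assert (ramp c w fb <= ramp c w fa); [|lra].
  apply ramp_mono; auto. unfold fa, fb.
  assert ((- IZR s) * (b - a) >= 0) by (apply Rle_ge, Rmult_le_pos; lra). lra.
Qed.

(* Testing E = D + Δf against ramp c w ∘ f, whose values lie in [0, 1]:
   the pairing with E is at most deg E = d, the part coming from D is
   nonnegative and every piece contributes nonnegatively, so a single piece
   contributes at most d. *)
Lemma ramp_piece_bound G f Lp (D E : Div) d lD l :
  represents G f Lp -> profiles_ok G Lp ->
  (forall p, E p = (D p + profile_laplacian G Lp p)%Z) -> effective D -> effective E ->
  NoDup lD -> (forall p, D p <> 0%Z -> In p lD) -> fold_right Z.add 0%Z (map D lD) = d ->
  NoDup l -> (forall p, E p <> 0%Z -> In p l) ->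
  forall c w, 0 < w -> forall e, (e < nE G)%nat -> forall a s b, is_piece 0 (Lp e) a s b ->
  IZR s * (ramp c w (f (pt G e b)) - ramp c w (f (pt G e a))) <= IZR d.
Proof.
intros Hr Hp HE HDe HEe NlD HlD Hdeg Nl Hl c w hw e He a s b Hin.
set (psi := fun p => ramp c w (f p)).
assert (Hform : forall phi, sum_pts l (fun p => IZR (E p) * phi p) =
   sum_pts lD (fun p => IZR (D p) * phi p) + sum_nat (nE G) (fun e => edge_pairing G e 0 (Lp e) phi))
  by (intros phi; apply pairing_formula; auto).
assert (HdegE : sum_pts l (fun p => IZR (E p) * 1) = IZR d).
{ rewrite (Hform (fun _ => 1)), sum_nat_zero by (intros; apply edge_pairing_one).
  rewrite sum_pts_Z, Hdeg. ring. }
assert (Hrng : forall p, 0 <= psi p <= 1) by (intros; unfold psi, ramp; apply clamp_range; lra).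
assert (Hpiece : IZR s * (psi (pt G e b) - psi (pt G e a)) <= edge_pairing G e 0 (Lp e) psi).
{ apply edge_pairing_ge; auto. intros; apply (ramp_piece_nonneg G f Lp); auto. }
assert (Hedge : edge_pairing G e 0 (Lp e) psi <= sum_nat (nE G) (fun e => edge_pairing G e 0 (Lp e) psi)).
{ apply (sum_nat_ge_term (nE G) (fun e => edge_pairing G e 0 (Lp e) psi)); auto.
  intros j Hj. apply edge_pairing_nonneg. intros; apply (ramp_piece_nonneg G f Lp); auto. }
assert (HD : 0 <= sum_pts lD (fun p => IZR (D p) * psi p)).
{ rewrite <- (sum_pts_zero lD (fun _ => 0)) by auto. apply sum_pts_le. intros p _.
  apply Rmult_le_pos; [apply IZR_le, HDe|apply Hrng]. }
assert (HEd : sum_pts l (fun p => IZR (E p) * psi p) <= IZR d).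
{ rewrite <- HdegE. apply sum_pts_le. intros p _. apply Rmult_le_compat_l; [apply IZR_le, HEe|apply Hrng]. }
rewrite Hform in HEd. unfold psi in *. lra.
Qed.

(* Slope bound: every slope of a profile of E = D + Δf in |D| satisfies
   |s| <= d.  Choose the ramp that goes from 0 to 1 exactly along the piece. *)
Lemma slope_bound G f Lp (D E : Div) d lD :
  represents G f Lp -> profiles_ok G Lp -> (forall e, (e < nE G)%nat -> strict_prof 0 (Lp e)) ->
  (forall p, E p = (D p + profile_laplacian G Lp p)%Z) -> effective D -> effective E ->
  NoDup lD -> (forall p, D p <> 0%Z -> In p lD) -> fold_right Z.add 0%Z (map D lD) = d ->
  (exists l, forall p, E p <> 0%Z -> In p l) ->
  forall e, (e < nE G)%nat -> forall a s b, is_piece 0 (Lp e) a s b -> (Z.abs s <= d)%Z.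
Proof.
intros Hr Hp Hst HE HDe HEe NlD HlD Hdeg HlE e He a s b Hin.
destruct (nodup_support E HlE) as [l [Nl Hl]].
pose proof (ramp_piece_bound G f Lp D E d lD l Hr Hp HE HDe HEe NlD HlD Hdeg Nl Hl) as Key.
destruct (Hp e He) as [HS HL].
destruct (pieces_range _ _ _ _ _ HS Hin) as [R1 R2]. rewrite HL in R2.
pose proof (pieces_strict _ _ _ _ _ (Hst e He) Hin) as Hab.
assert (Fa : f (pt G e a) = f (Vtx (esrc G e)) + prof_val 0 (Lp e) a)
  by (rewrite <- edge_fun_pt; apply Hr; auto; lra).
assert (Fb : f (pt G e b) = f (Vtx (esrc G e)) + prof_val 0 (Lp e) b)
  by (rewrite <- edge_fun_pt; apply Hr; auto; lra).
assert (Df : prof_val 0 (Lp e) b - prof_val 0 (Lp e) a = IZR s * (b - a))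
  by (apply (pieces_diff _ _ _ _ _ HS Hin); lra).
assert (Eb : prof_val 0 (Lp e) b = prof_val 0 (Lp e) a + IZR s * (b - a)) by lra.
apply le_IZR. rewrite abs_IZR.
destruct (Z_lt_le_dec 0 s) as [hs|hs]; [|destruct (Z.eq_dec s 0) as [hs0|hs0]].
- assert (hs' : 0 < IZR s) by (apply IZR_lt; auto).
  assert (hw : 0 < IZR s * (b - a)) by (apply Rmult_lt_0_compat; lra).
  pose proof (Key (f (pt G e a)) (IZR s * (b - a)) hw e He a s b Hin) as K.
  unfold ramp in K. replace ((f (pt G e b) - f (pt G e a)) / (IZR s * (b - a))) with 1 in K
    by (rewrite Fa, Fb, Eb; field; lra).
  replace ((f (pt G e a) - f (pt G e a)) / (IZR s * (b - a))) with 0 in K by (field; lra).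
  rewrite clamp_in, clamp_in in K by lra. rewrite Rabs_right by lra. lra.
- subst s. pose proof (Key 0 1 Rlt_0_1 e He a 0%Z b Hin) as K.
  rewrite Rabs_R0. simpl in K. lra.
- assert (hs' : IZR s < 0) by (apply IZR_lt; lia).
  assert (hw : 0 < - IZR s * (b - a)) by (apply Rmult_lt_0_compat; lra).
  pose proof (Key (f (pt G e b)) (- IZR s * (b - a)) hw e He a s b Hin) as K.
  unfold ramp in K. replace ((f (pt G e a) - f (pt G e b)) / (- IZR s * (b - a))) with 1 in K
    by (rewrite Fa, Fb, Eb; field; lra).
  replace ((f (pt G e b) - f (pt G e b)) / (- IZR s * (b - a))) with 0 in K by (field; lra).
  rewrite clamp_in, clamp_in in K by lra. rewrite Rabs_left by lra. lra.
Qed.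

(* Merging neighbouring pieces of equal slope.  In an alternating profile
   neighbouring slopes differ, so every inner breakpoint is a kink. *)
Fixpoint merge_slopes (L : list (Z * R)) : list (Z * R) :=
  match L with
  | nil => nil
  | (s, b) :: r =>
    match merge_slopes r with
    | nil => (s, b) :: nil
    | (s', b') :: r' => if Z.eq_dec s s' then (s, b') :: r' else (s, b) :: (s', b') :: r'
    end
  end.

Fixpoint alternating (L : list (Z * R)) : Prop :=
  match L with
  | (s, b) :: (((s', b') :: _) as r) => s <> s' /\ alternating r
  | _ => True
  end.

Lemma merge_strict a L : strict_prof a L -> strict_prof a (merge_slopes L) /\ last_break a (merge_slopes L) = last_break a L.
Proof.
revert a; induction L as [|[s b] r IH]; simpl; intros a HS; auto.
destruct HS as [hab HS]. destruct (IH b HS) as [I1 I2].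
destruct (merge_slopes r) as [|[s' b'] r'] eqn:Em; simpl in *.
- split; auto.
- destruct I1 as [h1 h2]. destruct Z.eq_dec; simpl; split; auto. split; auto; lra.
Qed.

Lemma merge_val a L t : strict_prof a L -> prof_val a (merge_slopes L) t = prof_val a L t.
Proof.
revert a; induction L as [|[s b] r IH]; simpl; intros a HS; auto.
destruct HS as [hab HS]. rewrite <- (IH b HS). pose proof (proj1 (merge_strict b r HS)) as MS.
destruct (merge_slopes r) as [|[s' b'] r'] eqn:Em; simpl in *; [ring|].
destruct MS as [h1 h2]. destruct Z.eq_dec as [->|ne]; simpl; [|ring].
rewrite <- (clamp_add a b b' t) by lra. ring.
Qed.

Lemma merge_alt L : alternating (merge_slopes L).
Proof.
induction L as [|[s b] r IH]; simpl; auto.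
destruct (merge_slopes r) as [|[s' b'] r'] eqn:Em; simpl; auto.
destruct Z.eq_dec as [->|ne]; simpl.
- destruct r' as [|[s'' b''] r'']; simpl in *; auto.
- split; auto.
Qed.

Lemma merge_forall (P : Z -> Prop) L : Forall (fun sb => P (fst sb)) L -> Forall (fun sb => P (fst sb)) (merge_slopes L).
Proof.
induction L as [|[s b] r IH]; simpl; intros H; auto. inversion H as [|? ? Hh Ht]; subst.
specialize (IH Ht). destruct (merge_slopes r) as [|[s' b'] r'] eqn:Em; simpl; auto.
inversion IH as [|? ? Hh' Ht']; subst.
destruct Z.eq_dec; simpl; auto.
Qed.

Lemma is_piece_forall (P : Z -> Prop) a L : (forall a' s b', is_piece a L a' s b' -> P s) ->
  Forall (fun sb => P (fst sb)) L.
Proof.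
revert a; induction L as [|[s b] r IH]; simpl; intros a H; auto.
constructor; simpl. - apply (H a s b); auto. - apply (IH b). intros; eapply H; right; eauto.
Qed.

Fixpoint inner_breaks (L : list (Z * R)) : list R :=
  match L with
  | (s, b) :: ((_ :: _) as r) => b :: inner_breaks r
  | _ => nil
  end.

Lemma inner_breaks_length L : L <> nil -> S (length (inner_breaks L)) = length L.
Proof.
induction L as [|[s b] r IH]; simpl; intros H; [congruence|].
destruct r as [|p r']; simpl; auto. simpl in IH. rewrite IH by congruence. auto.
Qed.

Lemma lslope_prof_before a L t : sorted_prof a L -> t <= a -> lslope_prof a L t = 0%Z.
Proof.
revert a; induction L as [|[s b] r IH]; simpl; intros a HS Ht; auto.
destruct HS. rewrite IH by (auto; lra). destruct Rlt_dec; [lra|]. auto.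
Qed.
Lemma rslope_prof_before a L t : sorted_prof a L -> t < a -> rslope_prof a L t = 0%Z.
Proof.
revert a; induction L as [|[s b] r IH]; simpl; intros a HS Ht; auto.
destruct HS. rewrite IH by (auto; lra). destruct Rle_dec; [lra|]. auto.
Qed.

Lemma inner_breaks_prop a L : strict_prof a L -> alternating L ->
  forall t, In t (inner_breaks L) -> a < t < last_break a L /\ lslope_prof a L t <> rslope_prof a L t.
Proof.
revert a; induction L as [|[s b] r IH]; simpl; intros a HS HA t Ht; [contradiction|].
destruct HS as [hab HS]. pose proof (strict_sorted _ _ HS) as SS.
destruct r as [|[s' b'] r']; [contradiction|].
destruct HA as [ne HA]. simpl in HS. destruct HS as [hbb HS'].
destruct Ht as [<-|Ht].
- pose proof (proj1 (sorted_prof_bounds _ _ (strict_sorted _ _ HS'))).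
  split; [simpl; lra|]. simpl.
  rewrite lslope_prof_before, rslope_prof_before by (try apply strict_sorted; auto; lra).
  repeat destruct Rlt_dec; repeat destruct Rle_dec; try lra. lia.
- destruct (IH b (conj hbb HS') HA t Ht) as [[r1 r2] r3]. split; [simpl in *; lra|].
  simpl in r3 |- *.
  destruct (Rle_dec a t); destruct (Rlt_dec t b); destruct (Rlt_dec a t); destruct (Rle_dec t b); try lra; lia.
Qed.

Lemma inner_breaks_range a L : strict_prof a L -> forall t, In t (inner_breaks L) -> a < t.
Proof.
revert a; induction L as [|[s b] r IH]; simpl; intros a HS t Ht; [contradiction|].
destruct HS as [hab HS]. destruct r as [|[s' b'] r']; [contradiction|].
destruct Ht as [<-|Ht]; auto. specialize (IH b HS t Ht). lra.
Qed.

Lemma inner_breaks_nodup a L : strict_prof a L -> NoDup (inner_breaks L).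
Proof.
revert a; induction L as [|[s b] r IH]; simpl; intros a HS; [constructor|].
destruct HS as [hab HS]. destruct r as [|[s' b'] r']; [constructor|].
constructor; [|apply (IH b HS)].
intros Hin. pose proof (inner_breaks_range b _ HS b Hin). lra.
Qed.

Lemma support_length (A : Div) l : effective A -> (forall p, A p <> 0%Z -> In p l) ->
  exists l', (forall p, A p <> 0%Z -> In p l') /\ (Z.of_nat (length l') <= fold_right Z.add 0%Z (map A l))%Z.
Proof.
intros HA Hl. exists (filter (fun p => negb (Z.eqb (A p) 0)) l). split.
- intros p Hp. apply filter_In. split; auto. apply Z.eqb_neq in Hp. rewrite Hp. auto.
- clear Hl. induction l as [|a l IH]; simpl; [lia|].
  specialize (HA a) as Ha. destruct (Z.eqb (A a) 0) eqn:E; simpl.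
  + apply Z.eqb_eq in E. lia.
  + apply Z.eqb_neq in E. lia.
Qed.

Lemma count_pieces G Lp (E D : Div) e lE lD :
  profiles_ok G Lp -> (e < nE G)%nat -> strict_prof 0 (Lp e) -> alternating (Lp e) ->
  (forall p, E p = (D p + profile_laplacian G Lp p)%Z) ->
  (forall p, E p <> 0%Z -> In p lE) -> (forall p, D p <> 0%Z -> In p lD) ->
  (length (Lp e) <= S (length lE + length lD))%nat.
Proof.
intros Hp He HS HA HE HlE HlD.
destruct (Lp e) as [|sb r] eqn:EL.
{ simpl; lia. }
rewrite <- (inner_breaks_length (sb :: r)) by congruence.
apply le_n_S. rewrite <- length_app.
assert (Hl : length (map (Int e) (inner_breaks (sb :: r))) = length (inner_breaks (sb :: r))) by apply length_map.
rewrite <- Hl. apply NoDup_incl_length.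
- apply FinFun.Injective_map_NoDup; [intros x y H; inversion H; auto|]. apply (inner_breaks_nodup 0). auto.
- intros q Hq. apply in_map_iff in Hq. destruct Hq as [t [<- Ht]].
  destruct (inner_breaks_prop 0 (sb :: r) HS HA t Ht) as [[r1 r2] r3].
  destruct (Hp e He) as [_ HL]. rewrite EL in HL. rewrite HL in r2.
  assert (profile_laplacian G Lp (Int e t) <> 0%Z).
  { rewrite laplacian_int by (auto; lra). rewrite EL. lia. }
  apply in_or_app. destruct (Z.eq_dec (E (Int e t)) 0) as [E0|E0].
  + right. apply HlD. rewrite HE in E0. lia.
  + left. apply HlE. auto.
Qed.

Definition pad_profile (len : R) (n : nat) (L : list (Z * R)) : list (Z * R) :=
  L ++ repeat (0%Z, len) (n - length L).

Lemma prof_val_repeat a k t : prof_val a (repeat (0%Z, a) k) t = 0.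
Proof. induction k; simpl; auto. rewrite IHk. ring. Qed.
Lemma last_break_repeat a k : last_break a (repeat (0%Z, a) k) = a.
Proof. induction k; simpl; auto. Qed.
Lemma sorted_repeat a k : sorted_prof a (repeat (0%Z, a) k).
Proof. induction k; simpl; auto. split; auto; lra. Qed.

Lemma pad_props a len n L : sorted_prof a L -> last_break a L = len -> (length L <= n)%nat ->
  sorted_prof a (pad_profile len n L) /\ last_break a (pad_profile len n L) = len /\ length (pad_profile len n L) = n /\
  forall t, prof_val a (pad_profile len n L) t = prof_val a L t.
Proof.
intros HS HL Hn. unfold pad_profile. split; [|split; [|split]].
- apply sorted_prof_app; auto. rewrite HL. apply sorted_repeat.
- rewrite last_break_app, HL. apply last_break_repeat.
- rewrite length_app, repeat_length. lia.
- intros t. rewrite prof_val_app, HL, prof_val_repeat. ring.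
Qed.

Lemma pad_forall (P : Z -> Prop) len n L : P 0%Z -> Forall (fun sb => P (fst sb)) L ->
  Forall (fun sb => P (fst sb)) (pad_profile len n L).
Proof.
intros H0 HL. unfold pad_profile. apply Forall_app. split; auto.
apply Forall_forall. intros x Hx. apply repeat_spec in Hx. subst. auto.
Qed.

Lemma prof_val_bound a L B : sorted_prof a L -> Forall (fun sb => (Z.abs (fst sb) <= B)%Z) L ->
  Rabs (prof_val a L (last_break a L)) <= IZR B * (last_break a L - a).
Proof.
revert a; induction L as [|[s b] r IH]; simpl; intros a HS HF.
- rewrite Rabs_R0. lra.
- destruct HS as [hab HS]. inversion HF as [|? ? Hh Ht]; subst. simpl in Hh.
  pose proof (proj1 (sorted_prof_bounds b r HS)).
  rewrite clamp_hi by lra. specialize (IH b HS Ht).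
  assert (Rabs (IZR s * (b - a)) <= IZR B * (b - a)).
  { rewrite Rabs_mult, (Rabs_right (b - a)) by lra. apply Rmult_le_compat_r; [lra|].
    rewrite Rabs_Zabs. apply IZR_le. auto. }
  pose proof (Rabs_triang (IZR s * (b - a)) (prof_val b r (last_break b r))). lra.
Qed.

Lemma map_nth_seq_eq {A : Type} (L : list A) d : map (fun j => nth j L d) (seq 0 (length L)) = L.
Proof.
induction L as [|a L IH]; simpl; auto. f_equal. rewrite <- seq_shift, map_map. simpl. auto.
Qed.

Definition floorZ (r : R) : Z := (up r - 1)%Z.
Lemma floorZ_IZR z : floorZ (IZR z) = z.
Proof. unfold floorZ. rewrite <- (tech_up (IZR z) (z + 1)); [lia| |]; rewrite plus_IZR; simpl; lra. Qed.
Lemma floorZ_spec r : IZR (floorZ r) <= r < IZR (floorZ r) + 1.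
Proof. unfold floorZ. destruct (archimed r) as [h1 h2]. rewrite minus_IZR. simpl. lra. Qed.

Lemma path_bound G (g : nat -> R) B u : 0 <= B -> (u < nV G)%nat -> edges_valid G ->
  (forall e, (e < nE G)%nat -> Rabs (g (etgt G e) - g (esrc G e)) <= B) ->
  forall v, reach G u v -> Rabs (g v - g u) <= INR (nV G) * B.
Proof.
intros HB Hu HG He v Hr.
assert (Inv : exists l, NoDup l /\ (forall z, In z l -> (z < nV G)%nat) /\ In v l /\
   forall z, In z l -> Rabs (g z - g u) <= INR (length l) * B).
{ induction Hr as [|w x e Hr IH Hel Hex].
  - exists (u :: nil). split; [constructor; [simpl; tauto|constructor]|]. split; [simpl; intros z [<-|[]]; auto|].
    split; [simpl; auto|]. intros z [<-|[]]. simpl. rewrite Rminus_diag, Rabs_R0. lra.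
  - destruct IH as [l [Nl [Hlv [Hw Hb]]]].
    assert (Hx : (x < nV G)%nat /\ Rabs (g x - g w) <= B).
    { destruct (HG e Hel) as [h1 [h2 _]]. specialize (He e Hel).
      destruct Hex as [[<- <-]|[<- <-]]; split; auto.
      rewrite Rabs_minus_sym; auto. }
    destruct Hx as [Hxn HxB].
    destruct (in_dec Nat.eq_dec x l) as [Hin|Hnin].
    + exists l; auto.
    + exists (l ++ x :: nil). split; [|split; [|split]].
      * apply NoDup_app; auto. constructor; [simpl; tauto|constructor]. intros z Hz [<-|[]]; contradiction.
      * intros z Hz. apply in_app_or in Hz. destruct Hz as [Hz|[<-|[]]]; auto.
      * apply in_or_app; right; simpl; auto.
      * intros z Hz. rewrite length_app, plus_INR. simpl INR.
        apply in_app_or in Hz. destruct Hz as [Hz|[<-|[]]].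
        -- specialize (Hb z Hz). lra.
        -- specialize (Hb w Hw). pose proof (Rabs_triang (g x - g w) (g w - g u)).
           replace (g x - g u) with ((g x - g w) + (g w - g u)) by ring. lra. }
destruct Inv as [l [Nl [Hlv [Hv Hb]]]].
specialize (Hb v Hv).
assert (length l <= nV G)%nat.
{ rewrite <- (length_seq (nV G) 0). apply NoDup_incl_length; auto. intros z Hz. apply in_seq. specialize (Hlv z Hz). lia. }
apply le_INR in H. assert (INR (length l) * B <= INR (nV G) * B) by (apply Rmult_le_compat_r; auto). lra.
Qed.

(* A priori bounds and the normal form of profiles.  kink_bound d = 2d bounds
   the number of inner breakpoints, vertex_bound the vertex values. *)
Definition total_length (G : MGraph) : R := sum_nat (nE G) (elen G).
Definition vertex_bound (G : MGraph) (d : Z) : R := INR (nV G) * (IZR d * total_length G).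
Definition kink_bound (d : Z) : nat := (2 * Z.to_nat d)%nat.

Lemma has_degree_nonneg (D : Div) d : effective D -> has_degree D d -> (0 <= d)%Z.
Proof.
intros HD [l [_ [_ <-]]]. induction l; simpl; [lia|]. specialize (HD a). lia.
Qed.

Lemma total_length_ge G e : edges_valid G -> (e < nE G)%nat -> elen G e <= total_length G.
Proof.
intros HG He. unfold total_length. apply (sum_nat_ge_term (nE G) (elen G)); auto.
intros j Hj. destruct (HG j Hj) as [_ [_ h]]; lra.
Qed.

Lemma total_length_nonneg G : edges_valid G -> 0 <= total_length G.
Proof.
intros HG. unfold total_length. assert (H : forall k, (k < nE G)%nat -> 0 <= elen G k) by (intros k hk; destruct (HG k hk) as [_ [_ h]]; lra).
revert H. generalize (nE G). intros n; induction n; simpl; intros H; [lra|].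
assert (0 <= sum_nat n (elen G)) by (apply IHn; intros; apply H; lia). assert (0 <= elen G n) by (apply H; lia). lra.
Qed.

Lemma divisor_eq_profiles G f Lp L (D E : Div) :
  edges_valid G -> represents G f Lp -> profiles_ok G Lp -> is_laplacian G f L ->
  (forall p, ~ valid_pt G p -> D p = 0%Z) -> (forall p, ~ valid_pt G p -> E p = 0%Z) ->
  (forall p, valid_pt G p -> (E p - D p)%Z = L p) ->
  forall p, E p = (D p + profile_laplacian G Lp p)%Z.
Proof.
intros HG Hr Hp Hlap HDinv HEinv HEL p. destruct (classic (valid_pt G p)) as [v|nv].
- rewrite <- (laplacian_unique G f Lp L Hr Hp HG Hlap p v), <- HEL by auto. lia.
- rewrite HEinv, HDinv by auto. unfold profile_laplacian. rewrite sumZ_zero; auto.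
  intros; apply edge_contrib_invalid; auto.
Qed.

Definition merged_profiles (G : MGraph) (f : Point -> R) (d : Z) (Lp : nat -> list (Z * R)) : Prop :=
  profiles_ok G Lp /\ represents G f Lp /\
  forall e, (e < nE G)%nat -> strict_prof 0 (Lp e) /\ alternating (Lp e) /\
    Forall (fun sb => (Z.abs (fst sb) <= d)%Z) (Lp e).

Definition normal_profiles (G : MGraph) (f : Point -> R) (n : nat) (d : Z) (Lp : nat -> list (Z * R)) : Prop :=
  profiles_ok G Lp /\ represents G f Lp /\
  forall e, (e < nE G)%nat -> length (Lp e) = n /\ Forall (fun sb => (Z.abs (fst sb) <= d)%Z) (Lp e).

Lemma merged_profiles_exist G D d E f L lD :
  edges_valid G -> is_divisor G D -> effective D ->
  NoDup lD -> (forall p, D p <> 0%Z -> In p lD) -> fold_right Z.add 0%Z (map D lD) = d ->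
  is_divisor G E -> effective E -> rational_fun G f -> is_laplacian G f L ->
  (forall p, valid_pt G p -> (E p - D p)%Z = L p) ->
  exists Lm, merged_profiles G f d Lm.
Proof.
intros HG [HDinv _] HDe NlD HlD Hsum [HEinv HEfin] HEe Hrat Hlap HEL.
assert (Hpr : forall e, exists Le, (e < nE G)%nat -> strict_prof 0 Le /\ last_break 0 Le = elen G e /\
   forall t, 0 <= t <= elen G e -> edge_fun G f e t = f (Vtx (esrc G e)) + prof_val 0 Le t).
{ intros e. destruct (Nat.lt_ge_cases e (nE G)) as [h|h].
  - destruct (rational_profile G f e h Hrat) as [Le H]. exists Le; auto.
  - exists nil; intros; lia. }
destruct (functional_choice _ Hpr) as [Lp HLp].
assert (Ok : profiles_ok G Lp)
  by (intros e He; destruct (HLp e He) as [h1 [h2 _]]; split; auto; apply strict_sorted; auto).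
assert (Rep : represents G f Lp) by (intros e He; apply HLp; auto).
assert (HE := divisor_eq_profiles G f Lp L D E HG Rep Ok Hlap HDinv HEinv HEL).
assert (Hsl : forall e, (e < nE G)%nat -> Forall (fun sb => (Z.abs (fst sb) <= d)%Z) (Lp e)).
{ intros e He. apply (is_piece_forall (fun s => (Z.abs s <= d)%Z) 0).
  intros a s b Hin. eapply (slope_bound G f Lp D E d lD); eauto.
  intros e' He'; apply HLp; auto. }
exists (fun e => merge_slopes (Lp e)). split; [|split].
- intros e He. destruct (HLp e He) as [h1 [h2 _]]. destruct (merge_strict 0 _ h1) as [m1 m2].
  split; [apply strict_sorted; auto|congruence].
- intros e He t Ht. destruct (HLp e He) as [h1 _]. rewrite merge_val by auto. apply Rep; auto.
- intros e He. destruct (HLp e He) as [h1 _]. split; [apply merge_strict; auto|]. split.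
  + apply merge_alt.
  + apply (merge_forall (fun s => (Z.abs s <= d)%Z)); auto.
Qed.

(* Every
   inner breakpoint of a merged profile is a kink of f, hence lies in
   supp E ∪ supp D, which has at most 2d points; pad with empty pieces. *)
Lemma normal_profiles_exist G D d E f L :
  edges_valid G -> is_divisor G D -> effective D -> has_degree D d ->
  is_divisor G E -> effective E -> rational_fun G f -> is_laplacian G f L ->
  (forall p, valid_pt G p -> (E p - D p)%Z = L p) ->
  exists Lq, normal_profiles G f (S (kink_bound d)) d Lq.
Proof.
intros HG [HDinv HDfin] HDe Hdeg [HEinv HEfin] HEe Hrat Hlap HEL.
pose proof (has_degree_nonneg D d HDe Hdeg) as Hd0.
destruct Hdeg as [lD [NlD [HlD Hsum]]].
destruct (merged_profiles_exist G D d E f L lD) as [Lm [OkM [RepM HLm]]]; auto.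
{ split; auto. }
{ split; auto. }
assert (HEM := divisor_eq_profiles G f Lm L D E HG RepM OkM Hlap HDinv HEinv HEL).
destruct (nodup_support E HEfin) as [lE [NlE HlE]].
assert (HdegE : fold_right Z.add 0%Z (map E lE) = d).
{ apply eq_IZR. rewrite <- sum_pts_Z. rewrite (pairing_formula G D Lm E lD lE (fun _ => 1)); auto.
  rewrite sum_nat_zero by (intros; apply edge_pairing_one). rewrite sum_pts_Z, Hsum. ring. }
destruct (support_length E lE HEe HlE) as [lE' [HlE' LE']].
destruct (support_length D lD HDe HlD) as [lD' [HlD' LD']].
assert (Hlen : forall e, (e < nE G)%nat -> (length (Lm e) <= S (kink_bound d))%nat).
{ intros e He. destruct (HLm e He) as [h1 [h3 _]].
  pose proof (count_pieces G Lm E D e lE' lD' OkM He h1 h3 HEM HlE' HlD').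
  unfold kink_bound. rewrite HdegE in LE'. rewrite Hsum in LD'. lia. }
assert (Hpad : forall e, (e < nE G)%nat ->
  let Le := pad_profile (elen G e) (S (kink_bound d)) (Lm e) in
  sorted_prof 0 Le /\ last_break 0 Le = elen G e /\ length Le = S (kink_bound d) /\
  (forall t, prof_val 0 Le t = prof_val 0 (Lm e) t) /\ Forall (fun sb => (Z.abs (fst sb) <= d)%Z) Le).
{ intros e He Le. destruct (OkM e He) as [h1 h2]. destruct (HLm e He) as [_ [_ h5]].
  destruct (pad_props 0 (elen G e) (S (kink_bound d)) (Lm e)) as [p1 [p2 [p3 p4]]]; auto.
  repeat split; auto. unfold Le. apply (pad_forall (fun s => (Z.abs s <= d)%Z)); [simpl; lia|auto]. }
exists (fun e => pad_profile (elen G e) (S (kink_bound d)) (Lm e)). split; [|split].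
- intros e He. destruct (Hpad e He) as [h1 [h2 _]]. split; auto.
- intros e He t Ht. destruct (Hpad e He) as [_ [_ [_ [h4 _]]]]. rewrite h4. apply RepM; auto.
- intros e He. destruct (Hpad e He) as [_ [_ [h3 [_ h5]]]]. split; auto.
Qed.

Lemma represents_target G f Lp e : edges_valid G -> represents G f Lp -> (e < nE G)%nat ->
  f (Vtx (etgt G e)) = f (Vtx (esrc G e)) + prof_val 0 (Lp e) (elen G e).
Proof.
intros HG Hr He. destruct (HG e He) as [_ [_ hl]]. rewrite <- Hr by (auto; lra).
unfold edge_fun. destruct Rle_dec; [lra|]. destruct Rle_dec; [auto|lra].
Qed.

Lemma vertex_values_bounded G f n d Lq : edges_valid G -> (0 < nV G)%nat ->
  (forall u v, (u < nV G)%nat -> (v < nV G)%nat -> reach G u v) -> (0 <= d)%Z ->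
  normal_profiles G f n d Lq ->
  forall v, (v < nV G)%nat -> Rabs (f (Vtx v) - f (Vtx 0%nat)) <= vertex_bound G d.
Proof.
intros HG HnV Hconn Hd0 [Ok [Rep HL]] v Hv. unfold vertex_bound.
apply (path_bound G (fun w => f (Vtx w)) (IZR d * total_length G) 0%nat); auto.
- apply Rmult_le_pos; [apply IZR_le; auto|]. apply total_length_nonneg; auto.
- intros e He. rewrite (represents_target G f Lq) by auto.
  destruct (Ok e He) as [h1 h2]. destruct (HL e He) as [_ h5].
  pose proof (prof_val_bound 0 (Lq e) d h1 h5) as VB. rewrite h2 in VB.
  replace (f (Vtx (esrc G e)) + prof_val 0 (Lq e) (elen G e) - f (Vtx (esrc G e)))
    with (prof_val 0 (Lq e) (elen G e)) by ring.
  pose proof (total_length_ge G e HG He). destruct (HG e He) as [_ [_ hl]].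
  assert (IZR d * (elen G e - 0) <= IZR d * total_length G)
    by (apply Rmult_le_compat_l; [apply IZR_le; auto|lra]). lra.
Qed.

Definition in_box {K : Type} (ks : list K) (lo hi : K -> R) (x : K -> R) : Prop :=
  forall k, In k ks -> lo k <= x k <= hi k.
Definition near {K : Type} (ks : list K) (dl : R) (x y : K -> R) : Prop :=
  forall k, In k ks -> Rabs (y k - x k) < dl.

Definition Param := (nat * nat * nat)%type.
Definition kVtx (v : nat) : Param := (0%nat, v, 0%nat).
Definition kBrk (e j : nat) : Param := (1%nat, e, j).
Definition kSlope (e j : nat) : Param := (2%nat, e, j).
Definition param_eq_dec (a b : Param) : {a = b} + {a <> b}.
Proof. decide equality; try apply Nat.eq_dec. decide equality; apply Nat.eq_dec. Defined.

Definition param_break (G : MGraph) (N : nat) (x : Param -> R) (e j : nat) : R :=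
  if Nat.ltb j N then x (kBrk e j) else elen G e.
Definition param_profile (G : MGraph) (N : nat) (x : Param -> R) (e : nat) : list (Z * R) :=
  map (fun j => (floorZ (x (kSlope e j)), param_break G N x e j)) (seq 0 (S N)).
Definition divisor_of (G : MGraph) (D : Div) (N : nat) (x : Param -> R) : Div :=
  fun p => (D p + profile_laplacian G (param_profile G N x) p)%Z.
Definition param_keys (G : MGraph) (N : nat) : list Param :=
  map kVtx (seq 0 (nV G)) ++
  flat_map (fun e => map (kBrk e) (seq 0 N) ++ map (kSlope e) (seq 0 (S N))) (seq 0 (nE G)).
Definition box_lo (M : R) (d : Z) (k : Param) : R :=
  match k with (O, _, _) => - M | (S O, _, _) => 0 | _ => - IZR d end.
Definition box_hi (G : MGraph) (M : R) (d : Z) (k : Param) : R :=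
  match k with (O, _, _) => M | (S O, e, _) => elen G e | _ => IZR d end.
(* The constraints cutting |D| out of the box: integral slopes, sorted
   breakpoints, profiles consistent with the vertex values, and effectivity. *)
Definition integral_slopes (G : MGraph) (N : nat) (x : Param -> R) : Prop :=
  forall e j, (e < nE G)%nat -> (j <= N)%nat -> IZR (floorZ (x (kSlope e j))) = x (kSlope e j).
Definition sorted_breaks (G : MGraph) (N : nat) (x : Param -> R) : Prop :=
  forall e j, (e < nE G)%nat -> (S j < N)%nat -> x (kBrk e j) <= x (kBrk e (S j)).
Definition edges_consistent (G : MGraph) (N : nat) (x : Param -> R) : Prop :=
  forall e, (e < nE G)%nat ->
    x (kVtx (etgt G e)) = x (kVtx (esrc G e)) + prof_val 0 (param_profile G N x e) (elen G e).
Definition admissible (G : MGraph) (D : Div) (N : nat) (x : Param -> R) : Prop :=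
  integral_slopes G N x /\ sorted_breaks G N x /\ edges_consistent G N x /\
  effective (divisor_of G D N x).

Lemma in_keys_vtx G N v : (v < nV G)%nat -> In (kVtx v) (param_keys G N).
Proof. intros. unfold param_keys. apply in_or_app; left. apply in_map, in_seq. lia. Qed.
Lemma in_keys_brk G N e j : (e < nE G)%nat -> (j < N)%nat -> In (kBrk e j) (param_keys G N).
Proof.
intros. unfold param_keys. apply in_or_app; right. apply in_flat_map. exists e. split; [apply in_seq; lia|].
apply in_or_app; left. apply in_map, in_seq; lia.
Qed.
Lemma in_keys_slope G N e j : (e < nE G)%nat -> (j <= N)%nat -> In (kSlope e j) (param_keys G N).
Proof.
intros. unfold param_keys. apply in_or_app; right. apply in_flat_map. exists e. split; [apply in_seq; lia|].
apply in_or_app; right. apply in_map, in_seq; lia.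
Qed.

Lemma sorted_map_seq a (s : nat -> Z) (g : nat -> R) k n :
  a <= g k -> (forall j, (k <= j)%nat -> (S j < k + n)%nat -> g j <= g (S j)) ->
  sorted_prof a (map (fun j => (s j, g j)) (seq k n)).
Proof.
revert a k; induction n; intros a k H0 H; [simpl; auto|]. simpl. split; auto.
destruct n; [simpl; auto|].
apply IHn.
- apply H; lia.
- intros j h1 h2. apply H; lia.
Qed.

Lemma last_break_map_seq a (s : nat -> Z) (g : nat -> R) k n :
  last_break a (map (fun j => (s j, g j)) (seq k (S n))) = g (k + n)%nat.
Proof.
revert a k; induction n; intros a k; simpl.
- rewrite Nat.add_0_r. auto.
- specialize (IHn (g k) (S k)). simpl in IHn. rewrite IHn. f_equal. lia.
Qed.

Lemma param_profiles_ok G N M d x : edges_valid G ->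
  in_box (param_keys G N) (box_lo M d) (box_hi G M d) x ->
  (forall e j, (e < nE G)%nat -> (S j < N)%nat -> x (kBrk e j) <= x (kBrk e (S j))) ->
  profiles_ok G (param_profile G N x).
Proof.
intros HG Hb Hs e He. destruct (HG e He) as [_ [_ hl]].
assert (Bj : forall j, (j < N)%nat -> 0 <= x (kBrk e j) <= elen G e).
{ intros j Hj. apply (Hb (kBrk e j)). apply in_keys_brk; auto. }
split.
- apply sorted_map_seq.
  + unfold param_break. destruct (Nat.ltb_spec 0 N); [apply Bj; auto|lra].
  + intros j _ Hj. unfold param_break. destruct (Nat.ltb_spec j N); destruct (Nat.ltb_spec (S j) N); try lia.
    * apply Hs; auto.
    * apply Bj; auto.
- unfold param_profile. rewrite last_break_map_seq. simpl. unfold param_break. destruct (Nat.ltb_spec N N); [lia|]. auto.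
Qed.

Definition encode (fv : nat -> R) (Lf : nat -> list (Z * R)) : Param -> R :=
  fun k => match k with
  | (O, v, _) => fv v
  | (S O, e, j) => snd (nth j (Lf e) (0%Z, 0))
  | (S (S O), e, j) => IZR (fst (nth j (Lf e) (0%Z, 0)))
  | _ => 0 end.

Lemma last_break_nth a L d : L <> nil -> last_break a L = snd (nth (length L - 1) L d).
Proof.
revert a; induction L as [|[s b] r IH]; intros a H; [congruence|].
destruct r as [|p r']; [simpl; auto|].
change (last_break a ((s,b)::p::r')) with (last_break b (p::r')). rewrite (IH b) by congruence.
replace (length ((s, b) :: p :: r') - 1)%nat with (S (length (p :: r') - 1)) by (simpl; lia).
reflexivity.
Qed.

Lemma param_profile_encode G N fv Lf e : length (Lf e) = S N -> last_break 0 (Lf e) = elen G e ->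
  param_profile G N (encode fv Lf) e = Lf e.
Proof.
intros Hl HL. unfold param_profile.
transitivity (map (fun j => nth j (Lf e) (0%Z,0)) (seq 0 (length (Lf e)))); [|apply map_nth_seq_eq]. rewrite Hl.
apply map_ext_in. intros j Hj. apply in_seq in Hj. simpl.
rewrite floorZ_IZR. unfold param_break. destruct (Nat.ltb_spec j N).
- simpl. destruct (nth j (Lf e) (0%Z, 0)); auto.
- assert (j = N) by lia. subst. rewrite (last_break_nth 0 (Lf e) (0%Z, 0)) in HL by (intros E; rewrite E in Hl; discriminate).
  rewrite Hl in HL. simpl in HL. rewrite Nat.sub_0_r in HL. rewrite <- HL. destruct (nth N (Lf e) (0%Z, 0)); auto.
Qed.

Lemma floorZ_IZR_eq z : IZR (floorZ (IZR z)) = IZR z.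
Proof. rewrite floorZ_IZR. auto. Qed.

Lemma sorted_nth a L j : sorted_prof a L -> (S j < length L)%nat ->
  snd (nth j L (0%Z, 0)) <= snd (nth (S j) L (0%Z, 0)).
Proof.
revert a j; induction L as [|[s b] r IH]; intros a j HS Hj; simpl in Hj; [lia|].
destruct HS as [h1 h2]. destruct j as [|j].
- destruct r as [|[s' b'] r']; simpl in *; [lia|]. destruct h2; auto.
- simpl. apply (IH b); auto. lia.
Qed.

Lemma param_keys_inv G N k : In k (param_keys G N) ->
  (exists v, k = kVtx v /\ (v < nV G)%nat) \/
  (exists e j, k = kBrk e j /\ (e < nE G)%nat /\ (j < N)%nat) \/
  (exists e j, k = kSlope e j /\ (e < nE G)%nat /\ (j <= N)%nat).
Proof.
unfold param_keys. intros Hk. apply in_app_or in Hk. destruct Hk as [Hk|Hk].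
- apply in_map_iff in Hk. destruct Hk as [v [<- Hv]]. apply in_seq in Hv. left; exists v; split; auto; lia.
- apply in_flat_map in Hk. destruct Hk as [e [He Hk]]. apply in_seq in He.
  apply in_app_or in Hk. destruct Hk as [Hk|Hk]; apply in_map_iff in Hk; destruct Hk as [j [<- Hj]]; apply in_seq in Hj.
  + right; left. exists e, j. split; auto; lia.
  + right; right. exists e, j. split; auto; lia.
Qed.

(* Every E in |D| is divisor_of x for an admissible parameter x in the box:
   encode the vertex values (normalised at vertex 0) and the normal profiles. *)
Lemma param_surjective G D d : edges_valid G -> (0 < nV G)%nat ->
  (forall u v, (u < nV G)%nat -> (v < nV G)%nat -> reach G u v) ->
  is_divisor G D -> effective D -> has_degree D d ->
  forall E, linear_system G D E ->
  exists x, in_box (param_keys G (kink_bound d)) (box_lo (vertex_bound G d) d) (box_hi G (vertex_bound G d) d) x /\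
    admissible G D (kink_bound d) x /\ divisor_of G D (kink_bound d) x = E.
Proof.
intros HG HnV Hconn HD HDe Hdeg E [HE [HEe [f [L [Hrat [Hlap HEL]]]]]].
pose proof (has_degree_nonneg D d HDe Hdeg) as Hd0.
destruct (normal_profiles_exist G D d E f L) as [Lq HLq]; auto.
destruct HLq as [OkQ [RepQ HLq]].
assert (HEQ := divisor_eq_profiles G f Lq L D E HG RepQ OkQ Hlap (proj1 HD) (proj1 HE) HEL).
assert (Hgb := vertex_values_bounded G f _ d Lq HG HnV Hconn Hd0 (conj OkQ (conj RepQ HLq))).
set (g := fun v => f (Vtx v) - f (Vtx 0%nat)).
set (x := encode g Lq).
assert (Hprof : forall e, (e < nE G)%nat -> param_profile G (kink_bound d) x e = Lq e).
{ intros e He. destruct (HLq e He) as [h3 _]. apply param_profile_encode; auto. apply OkQ; auto. }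
assert (HPhi : divisor_of G D (kink_bound d) x = E).
{ apply functional_extensionality. intros p. unfold divisor_of. rewrite HEQ. f_equal.
  unfold profile_laplacian. apply sumZ_ext. intros e He. rewrite Hprof; auto. }
exists x. split; [|split; [split; [|split; [|split]]|]].
- intros k Hk. apply param_keys_inv in Hk.
  destruct Hk as [[v [-> Hv]]|[[e [j [-> [He Hj]]]]|[e [j [-> [He Hj]]]]]].
  + simpl. pose proof (Hgb v Hv) as Hb. unfold g. unfold Rabs in Hb. destruct Rcase_abs in Hb; split; lra.
  + simpl. destruct (OkQ e He) as [h1 h2]. destruct (HLq e He) as [h3 _].
    assert (Hin : In (nth j (Lq e) (0%Z, 0)) (Lq e)) by (apply nth_In; lia).
    destruct (nth j (Lq e) (0%Z, 0)) as [s b] eqn:En. simpl.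
    destruct (sorted_prof_bounds 0 (Lq e) h1) as [_ Hb]. specialize (Hb s b Hin). lra.
  + simpl. destruct (HLq e He) as [h3 h5].
    assert (Hin : In (nth j (Lq e) (0%Z, 0)) (Lq e)) by (apply nth_In; lia).
    rewrite Forall_forall in h5. specialize (h5 _ Hin).
    apply Z.abs_le in h5. destruct h5 as [a1 a2]. apply IZR_le in a1, a2. rewrite opp_IZR in a1.
    unfold box_lo, box_hi. split; auto.
- intros e j He Hj. simpl. apply floorZ_IZR_eq.
- intros e j He Hj. simpl. destruct (OkQ e He) as [h1 _]. destruct (HLq e He) as [h3 _].
  apply (sorted_nth 0); auto. lia.
- intros e He. rewrite Hprof by auto. unfold x, encode, kVtx, g.
  rewrite (represents_target G f Lq) by auto. ring.
- rewrite HPhi. auto.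
- exact HPhi.
Qed.

(* Conversely, every admissible parameter gives an element of |D|:
   drop_empty removes empty pieces, producing the strict profile required in
   the definition of a rational function. *)
Fixpoint drop_empty (a : R) (L : list (Z * R)) : list (Z * R) :=
  match L with
  | nil => nil
  | (s, b) :: r => if Req_EM_T a b then drop_empty b r else (s, b) :: drop_empty b r
  end.

Lemma drop_empty_props a L : sorted_prof a L ->
  strict_prof a (drop_empty a L) /\ last_break a (drop_empty a L) = last_break a L /\ forall t, prof_val a (drop_empty a L) t = prof_val a L t.
Proof.
revert a; induction L as [|[s b] r IH]; simpl; intros a HS; auto.
destruct HS as [hab HS]. destruct (IH b HS) as [I1 [I2 I3]].
destruct (Req_EM_T a b) as [<-|ne]; simpl.
- split; auto. split; auto. intros t. rewrite I3. unfold clamp, Rmin, Rmax; repeat destruct Rle_dec; lra.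
- split; [split; auto; lra|]. split; auto. intros t; rewrite I3; auto.
Qed.

Lemma pieces_nth a L i : (S i < length (a :: map snd L))%nat ->
  is_piece a L (nth i (a :: map snd L) 0) (fst (nth i L (0%Z, 0))) (nth (S i) (a :: map snd L) 0).
Proof.
revert a i; induction L as [|[s b] r IH]; intros a i Hi; simpl in Hi; [lia|].
destruct i as [|i].
- simpl. left; auto.
- simpl. right. apply (IH b i). simpl in *. rewrite ?length_map in *. lia.
Qed.

Lemma last_break_nth_map a L : last_break a L = nth (length L) (a :: map snd L) 0.
Proof. revert a; induction L as [|[s b] r IH]; intros a; simpl; auto. Qed.

Lemma strict_rational G f e L : 0 < elen G e -> strict_prof 0 L -> last_break 0 L = elen G e ->
  (forall t, 0 <= t <= elen G e -> edge_fun G f e t = f (Vtx (esrc G e)) + prof_val 0 L t) ->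
  exists l : list R, (2 <= length l)%nat /\ nth 0 l 0 = 0 /\
      nth (length l - 1) l 0 = elen G e /\
      forall i, (S i < length l)%nat ->
        nth i l 0 < nth (S i) l 0 /\
        exists (m : Z) (c : R), forall t, nth i l 0 <= t <= nth (S i) l 0 ->
          edge_fun G f e t = c + IZR m * t.
Proof.
intros hl HS HL Hrep. exists (0 :: map snd L).
assert (Lne : L <> nil) by (intros ->; simpl in HL; lra).
split; [destruct L; [congruence|]; simpl; lia|]. split; auto. split.
{ simpl length. rewrite length_map. replace (S (length L) - 1)%nat with (length L) by lia. rewrite <- last_break_nth_map. auto. }
intros i Hi. pose proof (pieces_nth 0 L i Hi) as Hin.
split; [eapply pieces_strict; eauto|].
set (a' := nth i (0 :: map snd L) 0). set (b' := nth (S i) (0 :: map snd L) 0). set (s := fst (nth i L (0%Z, 0))).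
pose proof (pieces_range _ _ _ _ _ (strict_sorted _ _ HS) Hin) as [R1 R2].
fold a' b' s in Hin, R1, R2. rewrite HL in R2.
exists s, (f (Vtx (esrc G e)) + prof_val 0 L a' - IZR s * a').
intros t Ht. rewrite Hrep by lra.
pose proof (pieces_diff _ _ _ _ _ (strict_sorted _ _ HS) Hin a' t) as Df.
assert (prof_val 0 L t - prof_val 0 L a' = IZR s * (t - a')) by (apply Df; lra). replace (IZR s * t) with (IZR s * (t - a') + IZR s * a') by ring. lra.
Qed.

Definition param_fun (G : MGraph) (N : nat) (x : Param -> R) (p : Point) : R :=
  match p with
  | Vtx v => x (kVtx v)
  | Int e t => x (kVtx (esrc G e)) + prof_val 0 (param_profile G N x e) t
  end.

Lemma param_in_system G D N M d x : edges_valid G -> is_divisor G D ->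
  in_box (param_keys G N) (box_lo M d) (box_hi G M d) x -> admissible G D N x ->
  linear_system G D (divisor_of G D N x).
Proof.
intros HG [HDinv [lD HlD]] Hb [Ci [Cs [Ce Cf]]].
assert (Ok : profiles_ok G (param_profile G N x)) by (apply (param_profiles_ok G N M d x); auto).
assert (Rep : represents G (param_fun G N x) (param_profile G N x)).
{ intros e He t Ht. destruct (Ok e He) as [HS HL]. destruct (HG e He) as [_ [_ hl]].
  rewrite edge_fun_pt. unfold pt. destruct (Rle_dec t 0).
  - unfold param_fun. assert (t = 0) by lra. subst. rewrite prof_val_before by (auto; lra). ring.
  - destruct (Rle_dec (elen G e) t).
    + unfold param_fun. assert (t = elen G e) by lra. subst. apply Ce; auto.
    + unfold param_fun. auto. }
split; [split|split].
- intros p Hp. unfold divisor_of. rewrite HDinv by auto. unfold profile_laplacian. rewrite sumZ_zero; auto.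
  intros; apply edge_contrib_invalid; auto.
- exists (lD ++ profile_points_all G (param_profile G N x)). intros p Hp. unfold divisor_of in Hp. apply in_or_app.
  destruct (Z.eq_dec (D p) 0) as [E|E]; [right; apply laplacian_nz_in; lia|left; auto].
- auto.
- exists (param_fun G N x), (profile_laplacian G (param_profile G N x)). split; [|split].
  + intros e He. destruct (Ok e He) as [HS HL]. destruct (HG e He) as [_ [_ hl]].
    destruct (drop_empty_props 0 _ HS) as [d1 [d2 d3]].
    apply (strict_rational G _ e (drop_empty 0 (param_profile G N x e))); auto.
    * rewrite d2; auto.
    * intros t Ht. rewrite d3. apply Rep; auto.
  + apply profile_laplacian_spec; auto.
  + intros p _. unfold divisor_of. lia.
Qed.

Lemma fin_delta {A : Type} (l : list A) (P : A -> R -> Prop) :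
  (forall a dl dl', P a dl -> 0 < dl' <= dl -> P a dl') ->
  (forall a, In a l -> exists dl, 0 < dl /\ P a dl) -> exists dl, 0 < dl /\ forall a, In a l -> P a dl.
Proof.
intros Hm. induction l as [|a l IH]; intros H.
- exists 1; split; [lra|]. intros a [].
- destruct (H a (or_introl eq_refl)) as [d1 [h1 P1]].
  destruct IH as [d2 [h2 P2]]; [intros; apply H; right; auto|].
  exists (Rmin d1 d2). split; [unfold Rmin; destruct Rle_dec; lra|].
  intros b [<-|Hb].
  + apply (Hm _ d1); auto. split; [unfold Rmin; destruct Rle_dec; lra|apply Rmin_l].
  + apply (Hm _ d2); auto. split; [unfold Rmin; destruct Rle_dec; lra|apply Rmin_r].
Qed.

Lemma continuity_pt_ball g x : continuity_pt g x -> forall eta, 0 < eta -> exists dl, 0 < dl /\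
  forall y, Rabs (y - x) < dl -> Rabs (g y - g x) < eta.
Proof.
intros Hc eta He. destruct (Hc eta He) as [dl [Hdl H]]. exists dl. split; auto.
intros y Hy. destruct (Req_EM_T x y) as [<-|ne].
- rewrite Rminus_diag, Rabs_R0. auto.
- apply (H y). split; [split; [exact I|auto]|]. exact Hy.
Qed.

Fixpoint pairing_along (g : R -> R) (a : R) (L : list (Z * R)) : R :=
  match L with nil => 0 | (s, b) :: r => IZR s * (g b - g a) + pairing_along g b r end.

Lemma edge_pairing_along G e a L phi : edge_pairing G e a L phi = pairing_along (edge_fun G phi e) a L.
Proof. revert a; induction L as [|[s b] r IH]; intros a; simpl; auto. rewrite IH, !edge_fun_pt. auto. Qed.

Definition close_profiles (dl : R) (L L' : list (Z * R)) : Prop :=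
  Forall2 (fun sb sb' => fst sb = fst sb' /\ Rabs (snd sb' - snd sb) < dl) L L'.

Lemma close_profiles_mono dl dl' L L' : dl' <= dl -> close_profiles dl' L L' -> close_profiles dl L L'.
Proof. intros h H. unfold close_profiles in *. eapply Forall2_impl; [|apply H]. simpl. intros a b [h1 h2]; split; auto; lra. Qed.

Lemma pairing_along_cont g a L : continuity g -> forall eta, 0 < eta -> exists dl, 0 < dl /\
  forall a' L', Rabs (a' - a) < dl -> close_profiles dl L L' ->
    Rabs (g a' - g a) <= eta /\ Rabs (pairing_along g a' L' - pairing_along g a L) <= eta.
Proof.
intros Hg. revert a; induction L as [|[s b] r IH]; intros a eta He.
- destruct (continuity_pt_ball g a (Hg a) eta He) as [dl [Hdl H]]. exists dl. split; auto.
  intros a' L' Ha HL. inversion HL; subst. simpl. split; [left; apply H; auto|]. rewrite Rminus_diag, Rabs_R0. lra.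
- set (c := IZR (Z.abs s) + 1).
  assert (hc : 1 <= c) by (unfold c; pose proof (IZR_le 0 (Z.abs s) (Z.abs_nonneg s)); lra).
  set (e1 := eta / (4 * c)).
  assert (he1 : 0 < e1) by (unfold e1; apply Rdiv_lt_0_compat; lra).
  destruct (IH b e1 he1) as [d1 [hd1 H1]].
  destruct (continuity_pt_ball g a (Hg a) e1 he1) as [d2 [hd2 H2]].
  exists (Rmin d1 d2). split; [unfold Rmin; destruct Rle_dec; lra|].
  intros a' L' Ha HL. inversion HL as [|sb sb' r0 r' [hs hb] Hr]; subst.
  destruct sb' as [s' b']. simpl in hs, hb. subst s'.
  assert (Hmin1 : Rmin d1 d2 <= d1) by apply Rmin_l. assert (Hmin2 : Rmin d1 d2 <= d2) by apply Rmin_r.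
  destruct (H1 b' r') as [A1 A2]; [lra|apply (close_profiles_mono _ (Rmin d1 d2)); auto|].
  assert (A3 : Rabs (g a' - g a) < e1) by (apply H2; lra).
  simpl.
  assert (Hs : Rabs (IZR s) <= c) by (unfold c; rewrite Rabs_Zabs; lra).
  assert (T : Rabs (IZR s * (g b' - g a') + pairing_along g b' r' - (IZR s * (g b - g a) + pairing_along g b r)) <=
     Rabs (IZR s) * (Rabs (g b' - g b) + Rabs (g a' - g a)) + Rabs (pairing_along g b' r' - pairing_along g b r)).
  { replace (IZR s * (g b' - g a') + pairing_along g b' r' - (IZR s * (g b - g a) + pairing_along g b r)) with
      (IZR s * ((g b' - g b) - (g a' - g a)) + (pairing_along g b' r' - pairing_along g b r)) by ring.
    eapply Rle_trans; [apply Rabs_triang|]. rewrite Rabs_mult.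
    apply Rplus_le_compat_r. apply Rmult_le_compat_l; [apply Rabs_pos|].
    eapply Rle_trans; [apply Rabs_triang|]. rewrite Rabs_Ropp. lra. }
  assert (Rabs (IZR s) * (Rabs (g b' - g b) + Rabs (g a' - g a)) <= c * (2 * e1)).
  { apply Rmult_le_compat; try lra; [apply Rabs_pos|]. pose proof (Rabs_pos (g b' - g b)); pose proof (Rabs_pos (g a' - g a)); lra. }
  assert (c * (2 * e1) = eta / 2) by (unfold e1; field; lra).
  assert (e1 <= eta / 4) by (unfold e1; apply Rmult_le_compat_l; [lra|]; apply Rinv_le_contravar; lra).
  split; lra.
Qed.

Lemma sum_nat_abs_le n F F' eta : (forall k, (k < n)%nat -> Rabs (F k - F' k) <= eta) ->
  Rabs (sum_nat n F - sum_nat n F') <= INR n * eta.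
Proof.
induction n; intros H; cbn [sum_nat].
- rewrite Rminus_diag, Rabs_R0. simpl. lra.
- replace (sum_nat n F + F n - (sum_nat n F' + F' n)) with ((sum_nat n F - sum_nat n F') + (F n - F' n)) by ring.
  eapply Rle_trans; [apply Rabs_triang|]. rewrite (S_INR n).
  assert (Rabs (sum_nat n F - sum_nat n F') <= INR n * eta) by (apply IHn; intros; apply H; lia).
  assert (Rabs (F n - F' n) <= eta) by (apply H; lia). lra.
Qed.

Lemma int_eq_of_close a b : Rabs (IZR a - IZR b) < 1 -> a = b.
Proof.
intros H. rewrite <- minus_IZR in H. apply Rabs_def2 in H. destruct H as [h1 h2].
assert (h1z : IZR (-1) < IZR (a - b)) by (simpl; lra). assert (h2z : IZR (a - b) < IZR 1) by (simpl; lra). apply lt_IZR in h1z. apply lt_IZR in h2z. lia.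
Qed.

Lemma param_profiles_close G N x y dl : 0 < dl -> integral_slopes G N x -> integral_slopes G N y -> dl <= 1/2 ->
  near (param_keys G N) dl x y ->
  forall e, (e < nE G)%nat -> close_profiles dl (param_profile G N x e) (param_profile G N y e).
Proof.
intros hdl Hx Hy hd Hk e He. unfold param_profile, close_profiles.
assert (Hgen : forall l, (forall j, In j l -> (j <= N)%nat) -> Forall2 (fun sb sb' => fst sb = fst sb' /\ Rabs (snd sb' - snd sb) < dl)
   (map (fun j => (floorZ (x (kSlope e j)), param_break G N x e j)) l) (map (fun j => (floorZ (y (kSlope e j)), param_break G N y e j)) l)).
{ induction l as [|j l IH]; intros Hl; simpl; constructor.
  - simpl. split.
    + assert (jN : (j <= N)%nat) by (apply Hl; simpl; auto).
      apply int_eq_of_close. rewrite (Hx e j He jN), (Hy e j He jN).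
      pose proof (Hk (kSlope e j) (in_keys_slope G N e j He jN)). rewrite Rabs_minus_sym. lra.
    + unfold param_break. destruct (Nat.ltb_spec j N).
      * apply Hk, in_keys_brk; auto.
      * rewrite Rminus_diag, Rabs_R0. auto.
  - apply IH. intros; apply Hl; simpl; auto. }
apply Hgen. intros j Hj. apply in_seq in Hj. lia.
Qed.

Definition param_edge_pairing (G : MGraph) (N : nat) (x : Param -> R) (phi : Point -> R) : R :=
  sum_nat (nE G) (fun e => edge_pairing G e 0 (param_profile G N x e) phi).

Lemma param_edge_pairing_close G N x phi : cont_on_graph G phi -> forall eta, 0 < eta -> exists dl, 0 < dl /\ dl <= 1/2 /\
  forall y, integral_slopes G N x -> integral_slopes G N y -> near (param_keys G N) dl x y ->
  Rabs (param_edge_pairing G N y phi - param_edge_pairing G N x phi) < eta.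
Proof.
intros Hc eta He.
set (e1 := eta / (INR (nE G) + 1)).
assert (he1 : 0 < e1) by (unfold e1; apply Rdiv_lt_0_compat; [auto|pose proof (pos_INR (nE G)); lra]).
destruct (fin_delta (seq 0 (nE G)) (fun e dl => forall a' L', Rabs (a' - 0) < dl -> close_profiles dl (param_profile G N x e) L' ->
    Rabs (pairing_along (edge_fun G phi e) a' L' - pairing_along (edge_fun G phi e) 0 (param_profile G N x e)) <= e1)) as [d0 [hd0 Hd0]].
{ intros e dl dl' H [h1 h2] a' L' Ha HL. apply H; [lra|]. apply (close_profiles_mono _ dl'); auto. }
{ intros e He'. apply in_seq in He'.
  destruct (pairing_along_cont (edge_fun G phi e) 0 (param_profile G N x e) (Hc e ltac:(lia)) e1 he1) as [dl [hdl H]].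
  exists dl. split; auto. intros a' L' Ha HL. apply (H a' L' Ha HL). }
exists (Rmin d0 (1/2)). split; [unfold Rmin; destruct Rle_dec; lra|]. split; [apply Rmin_r|].
intros y Hx Hy Hk.
assert (Hmin : Rmin d0 (1/2) <= d0) by apply Rmin_l.
eapply Rle_lt_trans; [apply (sum_nat_abs_le _ _ _ e1)|].
- intros e He'. rewrite !edge_pairing_along. apply (Hd0 e); [apply in_seq; lia| rewrite Rminus_diag, Rabs_R0; auto|].
  apply (close_profiles_mono _ (Rmin d0 (1/2))); auto. apply param_profiles_close; auto.
  + unfold Rmin; destruct Rle_dec; lra.
  + apply Rmin_r.
- unfold e1. pose proof (pos_INR (nE G)).
  replace (INR (nE G) * (eta / (INR (nE G) + 1))) with (eta * (INR (nE G) / (INR (nE G) + 1))) by (field; lra).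
  assert (INR (nE G) / (INR (nE G) + 1) < 1) by (apply (Rmult_lt_reg_r (INR (nE G) + 1)); [lra|]; field_simplify; lra).
  nra.
Qed.

Lemma lipschitz_continuity (g : R -> R) (L : R) : 0 <= L -> (forall x y, Rabs (g x - g y) <= L * Rabs (x - y)) -> continuity g.
Proof.
intros hL H x eps He. exists (eps / (L + 1)). split; [apply Rdiv_lt_0_compat; lra|].
intros y [_ Hy]. simpl in *. unfold R_dist in *.
eapply Rle_lt_trans; [apply H|].
assert (L * Rabs (y - x) <= L * (eps / (L + 1))) by (apply Rmult_le_compat_l; lra).
assert (L * (eps / (L + 1)) < eps).
{ apply (Rmult_lt_reg_r (L + 1)); [lra|]. field_simplify; lra. }
lra.
Qed.

Definition pos_part (u : R) : R := (u + Rabs u) / 2.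
Definition tent (c r t : R) : R := pos_part (1 - Rabs (t - c) / r).

Lemma pos_part_nonneg u : 0 <= pos_part u.
Proof. unfold pos_part, Rabs; destruct Rcase_abs; lra. Qed.
Lemma pos_part_lip u v : Rabs (pos_part u - pos_part v) <= Rabs (u - v).
Proof. unfold pos_part. unfold Rabs at 1 2 3 4; repeat destruct Rcase_abs; lra. Qed.
Lemma pos_part_zero u : u <= 0 -> pos_part u = 0.
Proof. intros; unfold pos_part, Rabs; destruct Rcase_abs; lra. Qed.
Lemma tent_nonneg c r t : 0 <= tent c r t.
Proof. apply pos_part_nonneg. Qed.
Lemma tent_center c r : 0 < r -> tent c r c = 1.
Proof. intros. unfold tent, pos_part. rewrite Rminus_diag, Rabs_R0. unfold Rdiv. rewrite Rmult_0_l, Rminus_0_r, Rabs_R1. lra. Qed.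
Lemma tent_far c r t : 0 < r -> r <= Rabs (t - c) -> tent c r t = 0.
Proof.
intros hr H. unfold tent. apply pos_part_zero.
assert (1 <= Rabs (t - c) / r). { apply (Rmult_le_reg_r r); auto. unfold Rdiv. rewrite Rmult_assoc, Rinv_l by lra. lra. }
lra.
Qed.
Lemma tent_lip c r x y : 0 < r -> Rabs (tent c r x - tent c r y) <= (/ r) * Rabs (x - y).
Proof.
intros hr. unfold tent. eapply Rle_trans; [apply pos_part_lip|].
replace (1 - Rabs (x - c) / r - (1 - Rabs (y - c) / r)) with (/ r * (Rabs (y - c) - Rabs (x - c))) by (field; lra).
rewrite Rabs_mult, Rabs_inv, (Rabs_right r) by lra. apply Rmult_le_compat_l; [left; apply Rinv_0_lt_compat; lra|].
eapply Rle_trans; [apply Rabs_triang_inv2|]. replace (y - c - (x - c)) with (- (x - y)) by ring. rewrite Rabs_Ropp. lra.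
Qed.

(* The clamp to [0, len], written so as to be visibly 1-Lipschitz. *)
Definition clamp_edge (len t : R) : R := (Rabs t - Rabs (t - len) + len) / 2.
Lemma clamp_edge_in len t : 0 <= t <= len -> clamp_edge len t = t.
Proof. intros; unfold clamp_edge, Rabs; repeat destruct Rcase_abs; lra. Qed.
Lemma clamp_edge_lo len t : 0 <= len -> t <= 0 -> clamp_edge len t = 0.
Proof. intros; unfold clamp_edge, Rabs; repeat destruct Rcase_abs; lra. Qed.
Lemma clamp_edge_hi len t : 0 <= len -> len <= t -> clamp_edge len t = len.
Proof. intros; unfold clamp_edge, Rabs; repeat destruct Rcase_abs; lra. Qed.
Lemma clamp_edge_lip len x y : Rabs (clamp_edge len x - clamp_edge len y) <= Rabs (x - y).
Proof. unfold clamp_edge, Rabs; repeat destruct Rcase_abs; lra. Qed.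

Lemma bump_int G e0 t0 (Q : list Point) : (e0 < nE G)%nat -> 0 < t0 < elen G e0 ->
  exists phi : Point -> R, cont_on_graph G phi /\ (forall q, 0 <= phi q) /\ phi (Int e0 t0) = 1 /\
    forall q, In q Q -> valid_pt G q -> q <> Int e0 t0 -> phi q = 0.
Proof.
intros He Ht.
destruct (fin_delta Q (fun q r => forall t, q = Int e0 t -> t <> t0 -> r <= Rabs (t - t0))) as [r1 [hr1 Hr1]].
{ intros q dl dl' H [h1 h2] t Eq ne. specialize (H t Eq ne). lra. }
{ intros q _. destruct (classic (exists t, q = Int e0 t /\ t <> t0)) as [[t [-> ne]]|nq].
  - exists (Rabs (t - t0)). split; [apply Rabs_pos_lt; lra|]. intros t' E ne'. inversion E; subst. lra.
  - exists 1. split; [lra|]. intros t E ne. exfalso; apply nq; exists t; auto. }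
set (r := Rmin r1 (Rmin t0 (elen G e0 - t0))).
assert (hr : 0 < r) by (unfold r, Rmin; repeat destruct Rle_dec; lra).
assert (hr1' : r <= r1) by apply Rmin_l.
assert (hr2 : r <= t0) by (unfold r; eapply Rle_trans; [apply Rmin_r|apply Rmin_l]).
assert (hr3 : r <= elen G e0 - t0) by (unfold r; eapply Rle_trans; [apply Rmin_r|apply Rmin_r]).
exists (fun q => match q with Vtx _ => 0 | Int e t => if Nat.eq_dec e e0 then tent t0 r t else 0 end).
split; [|split; [|split]].
- intros e He'. destruct (Nat.eq_dec e e0) as [->|ne].
  + apply (lipschitz_continuity _ (/ r)); [left; apply Rinv_0_lt_compat; auto|].
    assert (Hext : forall t, edge_fun G (fun q => match q with Vtx _ => 0 | Int e t => if Nat.eq_dec e e0 then tent t0 r t else 0 end) e0 t = tent t0 r t).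
    { intros t. unfold edge_fun. destruct (Rle_dec t 0).
      - rewrite tent_far; auto. rewrite Rabs_left1; lra.
      - destruct (Rle_dec (elen G e0) t).
        + rewrite tent_far; auto. rewrite Rabs_right; lra.
        + destruct (Nat.eq_dec e0 e0); [auto|congruence]. }
    intros x y. rewrite !Hext. apply tent_lip; auto.
  + apply (lipschitz_continuity _ 0); [lra|]. intros x y. unfold edge_fun.
    repeat destruct Rle_dec; try (destruct Nat.eq_dec; [congruence|]); rewrite Rminus_diag, Rabs_R0; lra.
- intros [v|e t]; [lra|]. destruct Nat.eq_dec; [apply tent_nonneg|lra].
- destruct Nat.eq_dec; [apply tent_center; auto|congruence].
- intros [v|e t] Hq Hv ne; auto. destruct (Nat.eq_dec e e0) as [->|ne']; auto.
  apply tent_far; auto. assert (t <> t0) by (intros ->; apply ne; auto).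
  specialize (Hr1 _ Hq t eq_refl H). lra.
Qed.

Definition vertex_tent (G : MGraph) (v : nat) (r : R) (q : Point) : R :=
  match q with
  | Vtx w => if Nat.eq_dec w v then 1 else 0
  | Int e t => (if Nat.eq_dec (esrc G e) v then tent 0 r t else 0) +
               (if Nat.eq_dec (etgt G e) v then tent (elen G e) r t else 0)
  end.

(* When r is at most half of every edge length, the vertex tent is continuous:
   on each edge it is a Lipschitz function of the clamped parameter. *)
Lemma vertex_tent_continuous G v r : edges_valid G -> 0 < r ->
  (forall e, (e < nE G)%nat -> r <= elen G e / 2) -> cont_on_graph G (vertex_tent G v r).
Proof.
intros HG hr Hr e He. destruct (HG e He) as [_ [_ hl]]. specialize (Hr e He).
set (K := fun t => (if Nat.eq_dec (esrc G e) v then tent 0 r t else 0) +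
                   (if Nat.eq_dec (etgt G e) v then tent (elen G e) r t else 0)).
assert (Hext : forall t, edge_fun G (vertex_tent G v r) e t = K (clamp_edge (elen G e) t)).
{ intros t. unfold edge_fun. destruct (Rle_dec t 0).
  - rewrite clamp_edge_lo by lra. unfold vertex_tent, K. rewrite tent_center by auto.
    rewrite (tent_far (elen G e) r 0) by (auto; rewrite Rabs_left1; lra).
    destruct Nat.eq_dec; destruct Nat.eq_dec; lra.
  - destruct (Rle_dec (elen G e) t).
    + rewrite clamp_edge_hi by lra. unfold vertex_tent, K. rewrite tent_center by auto.
      rewrite (tent_far 0 r (elen G e)) by (auto; rewrite Rabs_right; lra).
      destruct Nat.eq_dec; destruct Nat.eq_dec; lra.
    + rewrite clamp_edge_in by lra. auto. }
apply (lipschitz_continuity _ (2 * / r)); [left; apply Rmult_lt_0_compat; [lra|apply Rinv_0_lt_compat; auto]|].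
intros x y. rewrite !Hext. unfold K.
pose proof (clamp_edge_lip (elen G e) x y) as Hc.
set (cx := clamp_edge (elen G e) x). set (cy := clamp_edge (elen G e) y). fold cx cy in Hc.
pose proof (tent_lip 0 r cx cy hr). pose proof (tent_lip (elen G e) r cx cy hr).
assert (hi : 0 < / r) by (apply Rinv_0_lt_compat; auto).
assert (/ r * Rabs (cx - cy) <= / r * Rabs (x - y)) by (apply Rmult_le_compat_l; lra).
assert (0 <= / r * Rabs (x - y)) by (apply Rmult_le_pos; [lra|apply Rabs_pos]).
pose proof (Rabs_pos (x - y)).
destruct Nat.eq_dec; destruct Nat.eq_dec.
- replace (tent 0 r cx + tent (elen G e) r cx - (tent 0 r cy + tent (elen G e) r cy)) with
    ((tent 0 r cx - tent 0 r cy) + (tent (elen G e) r cx - tent (elen G e) r cy)) by ring.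
  eapply Rle_trans; [apply Rabs_triang|]. lra.
- replace (tent 0 r cx + 0 - (tent 0 r cy + 0)) with (tent 0 r cx - tent 0 r cy) by ring. lra.
- replace (0 + tent (elen G e) r cx - (0 + tent (elen G e) r cy))
    with (tent (elen G e) r cx - tent (elen G e) r cy) by ring. lra.
- replace (0 + 0 - (0 + 0)) with 0 by ring. rewrite Rabs_R0.
  assert (0 <= 2 * / r * Rabs (x - y)) by (apply Rmult_le_pos; lra). lra.
Qed.

(* A continuous nonnegative test function equal to 1 at a vertex v and
   vanishing at the valid points of Q other than v: a vertex tent whose
   radius is smaller than half of each edge and than the distance from the
   points of Q to the ends of their edges. *)
Lemma bump_vtx G v (Q : list Point) : edges_valid G -> (v < nV G)%nat ->
  exists phi : Point -> R, cont_on_graph G phi /\ (forall q, 0 <= phi q) /\ phi (Vtx v) = 1 /\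
    forall q, In q Q -> valid_pt G q -> q <> Vtx v -> phi q = 0.
Proof.
intros HG Hv.
destruct (fin_delta (seq 0 (nE G)) (fun e r => r <= elen G e / 2)) as [r1 [hr1 Hr1]].
{ intros e dl dl' H [h1 h2]. lra. }
{ intros e He. apply in_seq in He. destruct (HG e ltac:(lia)) as [_ [_ hl]].
  exists (elen G e / 2). split; lra. }
destruct (fin_delta Q (fun q r => forall e t, q = Int e t -> (e < nE G)%nat -> 0 < t < elen G e ->
  r <= t /\ r <= elen G e - t)) as [r2 [hr2 Hr2]].
{ intros q dl dl' H [h1 h2] e t Eq He Ht. specialize (H e t Eq He Ht). lra. }
{ intros q _. destruct (classic (exists e t, q = Int e t /\ (e < nE G)%nat /\ 0 < t < elen G e))
    as [[e [t [-> [He Ht]]]]|nq].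
  - exists (Rmin t (elen G e - t)). split; [unfold Rmin; destruct Rle_dec; lra|].
    intros e' t' E He' Ht'. inversion E; subst. split; [apply Rmin_l|apply Rmin_r].
  - exists 1. split; [lra|]. intros e t E He Ht. exfalso; apply nq; exists e, t; auto. }
set (r := Rmin r1 r2).
assert (hr : 0 < r) by (unfold r, Rmin; repeat destruct Rle_dec; lra).
assert (hra : r <= r1) by apply Rmin_l. assert (hrb : r <= r2) by apply Rmin_r.
exists (vertex_tent G v r). split; [|split; [|split]].
- apply vertex_tent_continuous; auto.
  intros e He. specialize (Hr1 e ltac:(apply in_seq; lia)). lra.
- intros [w|e t]; simpl.
  + destruct Nat.eq_dec; lra.
  + pose proof (tent_nonneg 0 r t). pose proof (tent_nonneg (elen G e) r t).
    destruct Nat.eq_dec; destruct Nat.eq_dec; lra.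
- simpl. destruct Nat.eq_dec; congruence.
- intros [w|e t] Hq Hvq ne; simpl.
  + destruct Nat.eq_dec; [subst; congruence|auto].
  + destruct Hvq as [He Ht]. destruct (Hr2 _ Hq e t eq_refl He Ht) as [h1 h2].
    rewrite (tent_far 0 r t), (tent_far (elen G e) r t); auto.
    * destruct Nat.eq_dec; destruct Nat.eq_dec; lra.
    * rewrite Rabs_left1; lra.
    * rewrite Rabs_right; lra.
Qed.

Lemma bump_function G p (Q : list Point) : edges_valid G -> valid_pt G p ->
  exists phi : Point -> R, cont_on_graph G phi /\ (forall q, 0 <= phi q) /\ phi p = 1 /\
    forall q, In q Q -> valid_pt G q -> q <> p -> phi q = 0.
Proof.
intros HG Hp. destruct p as [v|e t]; simpl in Hp.
- apply bump_vtx; auto.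
- destruct Hp. apply bump_int; auto.
Qed.

Lemma divisor_of_invalid G D N x p : edges_valid G -> is_divisor G D -> ~ valid_pt G p ->
  divisor_of G D N x p = 0%Z.
Proof.
intros HG [HDinv _] Hp. unfold divisor_of. rewrite HDinv by auto. unfold profile_laplacian.
rewrite sumZ_zero; auto. intros; apply edge_contrib_invalid; auto.
Qed.

Lemma divisor_of_support G D lD N x : (forall p, D p <> 0%Z -> In p lD) ->
  forall q, divisor_of G D N x q <> 0%Z -> In q (lD ++ profile_points_all G (param_profile G N x)).
Proof.
intros HlD q Hq. apply in_or_app. unfold divisor_of in Hq.
destruct (Z.eq_dec (D q) 0); [right; apply laplacian_nz_in; lia|left; apply HlD; auto].
Qed.

Definition param_pairing (G : MGraph) (D : Div) (lD : list Point) (N : nat) (x : Param -> R)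
  (phi : Point -> R) : R :=
  sum_pts lD (fun p => IZR (D p) * phi p) + param_edge_pairing G N x phi.

Lemma param_pairing_spec G D lD N x phi l :
  NoDup lD -> (forall p, D p <> 0%Z -> In p lD) ->
  NoDup l -> (forall p, divisor_of G D N x p <> 0%Z -> In p l) ->
  sum_pts l (fun p => IZR (divisor_of G D N x p) * phi p) = param_pairing G D lD N x phi.
Proof. intros. apply pairing_formula; auto. Qed.

Lemma pairing_divisor_of G D lD N x phi r : NoDup lD -> (forall p, D p <> 0%Z -> In p lD) ->
  pairing (divisor_of G D N x) phi r -> r = param_pairing G D lD N x phi.
Proof. intros NlD HlD [l [Nl [Hl ->]]]. apply param_pairing_spec; auto. Qed.

Lemma param_continuous G D N M d x : edges_valid G -> is_divisor G D ->
  in_box (param_keys G N) (box_lo M d) (box_hi G M d) x -> admissible G D N x ->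
  forall phis eps, Forall (cont_on_graph G) phis -> 0 < eps ->
  exists dl, 0 < dl /\ forall y, in_box (param_keys G N) (box_lo M d) (box_hi G M d) y -> admissible G D N y ->
    near (param_keys G N) dl x y ->
    weak_nbhd (linear_system G D) (divisor_of G D N x) phis eps (divisor_of G D N y).
Proof.
intros HG HD Hbx Cx phis eps Hphis Heps.
destruct HD as [HDinv HDfin]. destruct (nodup_support D HDfin) as [lD [NlD HlD]].
destruct (fin_delta phis (fun phi dl => forall y, integral_slopes G N x -> integral_slopes G N y ->
   near (param_keys G N) dl x y ->
   Rabs (param_edge_pairing G N y phi - param_edge_pairing G N x phi) < eps)) as [dl [hdl Hdl]].
{ intros phi dl dl' H [h1 h2] y Hx Hy Hk. apply H; auto. intros k Hk'. specialize (Hk k Hk'). lra. }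
{ intros phi Hin. rewrite Forall_forall in Hphis.
  destruct (param_edge_pairing_close G N x phi (Hphis phi Hin) eps Heps) as [dl [hdl [_ H]]]. exists dl; split; auto. }
exists dl. split; auto. intros y Hby Cy Hk. split.
- apply (param_in_system G D N M d y); auto. split; auto.
- intros phi Hin r r0 Hr Hr0.
  rewrite (pairing_divisor_of G D lD N y phi r NlD HlD Hr), (pairing_divisor_of G D lD N x phi r0 NlD HlD Hr0).
  unfold param_pairing.
  replace (_ + param_edge_pairing G N y phi - _) with
    (param_edge_pairing G N y phi - param_edge_pairing G N x phi) by ring.
  apply (Hdl phi Hin y); auto; [apply Cx|apply Cy].
Qed.

Lemma effective_pairing_nonneg G D lD N y phi : NoDup lD -> (forall p, D p <> 0%Z -> In p lD) ->
  effective (divisor_of G D N y) -> (forall q, 0 <= phi q) -> 0 <= param_pairing G D lD N y phi.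
Proof.
intros NlD HlD Hy Hnn.
set (l := nodup Point_eq_dec (lD ++ profile_points_all G (param_profile G N y))).
rewrite <- (param_pairing_spec G D lD N y phi l); auto.
- rewrite <- (sum_pts_zero l (fun _ => 0)) by auto. apply sum_pts_le. intros q _.
  apply Rmult_le_pos; [apply IZR_le, Hy|apply Hnn].
- apply NoDup_nodup.
- intros q Hq. apply nodup_In. apply (divisor_of_support G D); auto.
Qed.

Lemma sum_pts_single l F p : NoDup l -> In p l -> (forall q, q <> p -> F q = 0) -> sum_pts l F = F p.
Proof.
induction l as [|a l IH]; intros N Hin H; [contradiction|]. inversion N as [|? ? Na Nl]; subst.
rewrite sum_pts_cons. destruct Hin as [->|Hin].
- rewrite sum_pts_zero; [ring|]. intros q Hq. apply H. intros ->; contradiction.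
- rewrite IH by auto. rewrite H; [ring|]. intros ->; contradiction.
Qed.

Lemma negative_point_pairing G D lD N x p phi : edges_valid G -> is_divisor G D ->
  NoDup lD -> (forall q, D q <> 0%Z -> In q lD) -> (divisor_of G D N x p < 0)%Z -> phi p = 1 ->
  (forall q, In q (lD ++ profile_points_all G (param_profile G N x)) -> valid_pt G q -> q <> p -> phi q = 0) ->
  param_pairing G D lD N x phi <= -1.
Proof.
intros HG HD NlD HlD Hp Hp1 H0.
set (l := nodup Point_eq_dec (p :: lD ++ profile_points_all G (param_profile G N x))).
rewrite <- (param_pairing_spec G D lD N x phi l); auto.
- rewrite (sum_pts_single l _ p).
  + rewrite Hp1, Rmult_1_r. assert (Hp2 : (divisor_of G D N x p <= -1)%Z) by lia.
    apply IZR_le in Hp2. simpl in Hp2. lra.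
  + apply NoDup_nodup.
  + apply nodup_In. left; auto.
  + intros q ne. destruct (Z.eq_dec (divisor_of G D N x q) 0) as [E|E]; [rewrite E; simpl; ring|].
    rewrite H0; [ring|apply (divisor_of_support G D); auto| |auto].
    apply NNPP; intro nv; apply E; apply divisor_of_invalid; auto.
- apply NoDup_nodup.
- intros q Hq. apply nodup_In. right. apply (divisor_of_support G D); auto.
Qed.

Lemma not_integral_slopes_open G N x : ~ integral_slopes G N x ->
  exists dl, 0 < dl /\ forall y, near (param_keys G N) dl x y -> ~ integral_slopes G N y.
Proof.
intros Hi.
assert (Ex : exists e j, (e < nE G)%nat /\ (j <= N)%nat /\ IZR (floorZ (x (kSlope e j))) <> x (kSlope e j)).
{ apply NNPP; intro H; apply Hi; intros e j He Hj; apply NNPP; intro H'; apply H; exists e, j; auto. }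
destruct Ex as [e [j [He [Hj Hne]]]].
set (z := floorZ (x (kSlope e j))). pose proof (floorZ_spec (x (kSlope e j))) as [t1 t2]. fold z in t1, t2, Hne.
assert (t1' : IZR z < x (kSlope e j)) by lra.
exists (Rmin (x (kSlope e j) - IZR z) (IZR z + 1 - x (kSlope e j))). split; [unfold Rmin; destruct Rle_dec; lra|].
intros y Hk Ci.
specialize (Hk (kSlope e j) (in_keys_slope G N e j He Hj)). specialize (Ci e j He Hj).
assert (Hm1 := Rmin_l (x (kSlope e j) - IZR z) (IZR z + 1 - x (kSlope e j))).
assert (Hm2 := Rmin_r (x (kSlope e j) - IZR z) (IZR z + 1 - x (kSlope e j))).
apply Rabs_def2 in Hk. destruct Hk as [k1 k2].
assert (a1 : IZR z < IZR (floorZ (y (kSlope e j)))) by lra.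
assert (a2 : IZR (floorZ (y (kSlope e j))) < IZR (z + 1)) by (rewrite plus_IZR; simpl; lra).
apply lt_IZR in a1. apply lt_IZR in a2. lia.
Qed.

Lemma not_sorted_breaks_open G N x : ~ sorted_breaks G N x ->
  exists dl, 0 < dl /\ forall y, near (param_keys G N) dl x y -> ~ sorted_breaks G N y.
Proof.
intros Hs.
assert (Ex : exists e j, (e < nE G)%nat /\ (S j < N)%nat /\ x (kBrk e (S j)) < x (kBrk e j)).
{ apply NNPP; intro H; apply Hs; intros e j He Hj; apply Rnot_lt_le; intro H'; apply H; exists e, j; auto. }
destruct Ex as [e [j [He [Hj Hlt]]]].
exists ((x (kBrk e j) - x (kBrk e (S j))) / 2). split; [lra|].
intros y Hk Cs.
pose proof (Hk (kBrk e j) (in_keys_brk G N e j He ltac:(lia))) as k1.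
pose proof (Hk (kBrk e (S j)) (in_keys_brk G N e (S j) He Hj)) as k2.
specialize (Cs e j He Hj). apply Rabs_def2 in k1, k2. lra.
Qed.

Lemma prof_val_pairing_along_id a L t : sorted_prof a L -> last_break a L <= t ->
  prof_val a L t = pairing_along (fun u => u) a L.
Proof.
revert a; induction L as [|[s b] r IH]; simpl; intros a HS Ht; auto.
destruct HS as [h1 h2]. pose proof (proj1 (sorted_prof_bounds b r h2)). rewrite IH by (auto; lra).
rewrite clamp_hi by lra. auto.
Qed.

Lemma edge_increment_close G N M d x e : edges_valid G -> (e < nE G)%nat ->
  in_box (param_keys G N) (box_lo M d) (box_hi G M d) x -> sorted_breaks G N x -> integral_slopes G N x ->
  forall eta, 0 < eta -> exists dl, 0 < dl /\ forall y,
    in_box (param_keys G N) (box_lo M d) (box_hi G M d) y -> sorted_breaks G N y -> integral_slopes G N y ->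
    near (param_keys G N) dl x y ->
    Rabs (prof_val 0 (param_profile G N y e) (elen G e) - prof_val 0 (param_profile G N x e) (elen G e)) <= eta.
Proof.
intros HG He Hbx Hsx Hix eta Heta.
destruct (pairing_along_cont (fun u => u) 0 (param_profile G N x e)
  (derivable_continuous id derivable_id) eta Heta) as [d1 [hd1 Hd1]].
exists (Rmin d1 (1/2)). split; [unfold Rmin; destruct Rle_dec; lra|].
intros y Hby Hsy Hiy Hk.
destruct (param_profiles_ok G N M d x HG Hbx Hsx e He) as [S1 L1].
destruct (param_profiles_ok G N M d y HG Hby Hsy e He) as [S2 L2].
assert (CL : close_profiles d1 (param_profile G N x e) (param_profile G N y e)).
{ apply (close_profiles_mono _ (Rmin d1 (1/2))); [apply Rmin_l|].
  apply param_profiles_close; auto; [unfold Rmin; destruct Rle_dec; lra|apply Rmin_r]. }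
destruct (Hd1 0 (param_profile G N y e)) as [_ Hv]; [rewrite Rminus_diag, Rabs_R0; lra|auto|].
rewrite <- !(prof_val_pairing_along_id 0 _ (elen G e)) in Hv by (auto; lra). exact Hv.
Qed.

Lemma not_edges_consistent_open G N M d x : edges_valid G ->
  in_box (param_keys G N) (box_lo M d) (box_hi G M d) x -> sorted_breaks G N x -> integral_slopes G N x ->
  ~ edges_consistent G N x ->
  exists dl, 0 < dl /\ forall y,
    in_box (param_keys G N) (box_lo M d) (box_hi G M d) y -> sorted_breaks G N y -> integral_slopes G N y ->
    near (param_keys G N) dl x y -> ~ edges_consistent G N y.
Proof.
intros HG Hbx Hsx Hix Hc.
assert (Ex : exists e, (e < nE G)%nat /\
  x (kVtx (etgt G e)) <> x (kVtx (esrc G e)) + prof_val 0 (param_profile G N x e) (elen G e)).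
{ apply NNPP; intro H; apply Hc; intros e He; apply NNPP; intro H'; apply H; exists e; auto. }
destruct Ex as [e [He Hne]].
set (gap := Rabs (x (kVtx (etgt G e)) - x (kVtx (esrc G e)) - prof_val 0 (param_profile G N x e) (elen G e))).
assert (hgap : 0 < gap) by (unfold gap; apply Rabs_pos_lt; lra).
destruct (edge_increment_close G N M d x e HG He Hbx Hsx Hix (gap / 4)) as [d1 [hd1 Hd1]]; [lra|].
assert (Hdl : exists dl, 0 < dl /\ dl <= d1 /\ dl <= gap / 4)
  by (exists (Rmin d1 (gap / 4)); split; [unfold Rmin; destruct Rle_dec; lra|split; [apply Rmin_l|apply Rmin_r]]).
destruct Hdl as [dl [hdl [m1 m]]].
exists dl. split; auto. intros y Hby Hsy Hiy Hk Ce.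
assert (Hv := Hd1 y Hby Hsy Hiy (fun k Hk' => Rlt_le_trans _ _ _ (Hk k Hk') m1)).
destruct (HG e He) as [hs [ht hl]].
pose proof (Hk (kVtx (etgt G e)) (in_keys_vtx G N _ ht)) as k1.
pose proof (Hk (kVtx (esrc G e)) (in_keys_vtx G N _ hs)) as k2.
specialize (Ce e He).
apply Rabs_def2 in k1, k2. clear -Hv hgap k1 k2 Ce m. unfold gap in *. revert Hv hgap m.
unfold Rabs. repeat destruct Rcase_abs; intros; lra.
Qed.

(* Effectivity fails near a parameter where divisor_of has a negative
   coefficient: test against a bump_function at that point (bump_function, param_edge_pairing_close). *)
Lemma not_effective_open G D N x : edges_valid G -> is_divisor G D -> integral_slopes G N x ->
  ~ effective (divisor_of G D N x) ->
  exists dl, 0 < dl /\ forall y, integral_slopes G N y -> near (param_keys G N) dl x y ->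
    ~ effective (divisor_of G D N y).
Proof.
intros HG HD Hix Hf.
assert (Ex : exists p, (divisor_of G D N x p < 0)%Z)
  by (apply NNPP; intro H; apply Hf; intro p; apply Z.nlt_ge; intro H'; apply H; exists p; auto).
destruct Ex as [p Hp].
assert (Hpv : valid_pt G p) by (apply NNPP; intro H; rewrite divisor_of_invalid in Hp; auto; lia).
destruct HD as [HDinv HDfin]. destruct (nodup_support D HDfin) as [lD [NlD HlD]].
destruct (bump_function G p (lD ++ profile_points_all G (param_profile G N x)) HG Hpv) as [phi [Hc [Hnn [Hp1 H0]]]].
destruct (param_edge_pairing_close G N x phi Hc (1/2)) as [dl [hdl [_ Hdl]]]; [lra|].
exists dl. split; auto. intros y Hiy Hk Hy.
assert (Hsx := negative_point_pairing G D lD N x p phi HG (conj HDinv HDfin) NlD HlD Hp Hp1 H0).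
assert (Hsy := effective_pairing_nonneg G D lD N y phi NlD HlD Hy Hnn).
specialize (Hdl y Hix Hiy Hk). unfold param_pairing in *. apply Rabs_def2 in Hdl. lra.
Qed.

Lemma not_admissible_open G D N M d x : edges_valid G -> is_divisor G D ->
  in_box (param_keys G N) (box_lo M d) (box_hi G M d) x -> ~ admissible G D N x ->
  exists dl, 0 < dl /\ forall y, in_box (param_keys G N) (box_lo M d) (box_hi G M d) y ->
    near (param_keys G N) dl x y -> ~ admissible G D N y.
Proof.
intros HG HD Hbx nC.
destruct (classic (integral_slopes G N x)) as [Hi|Hi].
2:{ destruct (not_integral_slopes_open G N x Hi) as [dl [hdl H]].
    exists dl. split; auto. intros y _ Hk [Cy _]. exact (H y Hk Cy). }
destruct (classic (sorted_breaks G N x)) as [Hs|Hs].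
2:{ destruct (not_sorted_breaks_open G N x Hs) as [dl [hdl H]].
    exists dl. split; auto. intros y _ Hk [_ [Cy _]]. exact (H y Hk Cy). }
destruct (classic (edges_consistent G N x)) as [Hc|Hc].
2:{ destruct (not_edges_consistent_open G N M d x HG Hbx Hs Hi Hc) as [dl [hdl H]].
    exists dl. split; auto. intros y Hby Hk [Ci [Cs [Cc _]]]. exact (H y Hby Cs Ci Hk Cc). }
assert (Hf : ~ effective (divisor_of G D N x)) by (intros Hf; apply nC; repeat split; auto).
destruct (not_effective_open G D N x HG HD Hi Hf) as [dl [hdl H]].
exists dl. split; auto. intros y _ Hk [Ci [_ [_ Cf]]]. exact (H y Ci Hk Cf).
Qed.

Definition box_cover_property : Prop := forall (T : Type) (eqd : forall a b : T, {a = b} + {a <> b})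
  (ks : list T) (lo hi : T -> R) (delta : (T -> R) -> R),
  (forall x, 0 < delta x) ->
  exists xs : list (T -> R),
    (forall x, In x xs -> in_box ks lo hi x) /\
    (forall y, in_box ks lo hi y -> exists x, In x xs /\ near ks (delta x) x y).

Section CompactTransfer.
Variables (G : MGraph) (K : Div -> Prop) (T : Type) (eqd : forall a b : T, {a = b} + {a <> b}).
Variables (ks : list T) (lo hi : T -> R) (Phi : (T -> R) -> Div) (C : (T -> R) -> Prop).
Hypothesis Phi_into : forall x, in_box ks lo hi x -> C x -> K (Phi x).
Hypothesis Phi_cont : forall x, in_box ks lo hi x -> C x ->
  forall phis eps, Forall (cont_on_graph G) phis -> 0 < eps ->
  exists dl, 0 < dl /\ forall y, in_box ks lo hi y -> C y -> near ks dl x y ->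
    weak_nbhd K (Phi x) phis eps (Phi y).
Hypothesis C_closed : forall x, in_box ks lo hi x -> ~ C x ->
  exists dl, 0 < dl /\ forall y, in_box ks lo hi y -> near ks dl x y -> ~ C y.

Lemma local_cover_radius (I : Type) (U : I -> Div -> Prop) (i0 : I) :
  (forall i, open_in G K (U i)) -> (forall E, K E -> exists i, U i E) ->
  forall x, exists p : I * R, 0 < snd p /\
   (in_box ks lo hi x -> C x -> forall y, in_box ks lo hi y -> C y -> near ks (snd p) x y ->
      U (fst p) (Phi y)) /\
   (in_box ks lo hi x -> ~ C x -> forall y, in_box ks lo hi y -> near ks (snd p) x y -> ~ C y).
Proof.
intros Uopen Ucov x. destruct (classic (in_box ks lo hi x)) as [bx|nbx].
- destruct (classic (C x)) as [cx|ncx].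
  + destruct (Ucov (Phi x) (Phi_into x bx cx)) as [i Ui].
    destruct (Uopen i) as [_ Hop]. destruct (Hop _ Ui) as [phis [eps [Fc [Heps Hnb]]]].
    destruct (Phi_cont x bx cx phis eps Fc Heps) as [dl [Hdl Hy]].
    exists (i, dl); simpl; split; [auto|]. split.
    * intros _ _ y by0 cy Hyx. apply Hnb, Hy; auto.
    * intros _ ncx; contradiction.
  + destruct (C_closed x bx ncx) as [dl [Hdl Hy]].
    exists (i0, dl); simpl; split; [auto|]. split; [tauto|]. intros _ _; apply Hy.
- exists (i0, 1); simpl; split; [lra|]. split; intros; contradiction.
Qed.

Lemma compact_transfer : box_cover_property ->
  (forall E, K E -> exists x, in_box ks lo hi x /\ C x /\ Phi x = E) ->
  compact_in G K.
Proof.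
intros HB Hsurj I U Uopen Ucov.
destruct (classic (exists E, K E)) as [[E0 KE0]|nK].
2:{ exists nil. intros E KE. exfalso. apply nK. exists E; auto. }
destruct (Ucov E0 KE0) as [i0 _].
destruct (functional_choice _ (local_cover_radius I U i0 Uopen Ucov)) as [ch Hch].
destruct (HB T eqd ks lo hi (fun x => snd (ch x))) as [xs [Hxs Hcov]].
{ intros x; apply Hch. }
exists (map (fun x => fst (ch x)) xs).
intros E KE. destruct (Hsurj E KE) as [y [by0 [cy <-]]].
destruct (Hcov y by0) as [x [inx Hyx]].
exists (fst (ch x)). split; [apply (in_map (fun x => fst (ch x))); auto|].
destruct (Hch x) as [_ [H1 H2]].
destruct (classic (C x)) as [cx|ncx].
- apply (H1 (Hxs x inx) cx y by0 cy Hyx).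
- exfalso. apply (H2 (Hxs x inx) ncx y by0 Hyx cy).
Qed.

End CompactTransfer.

(* Position of k in the list ks, used to identify the coordinates listed in
   ks with the entries of a row vector. *)
Fixpoint posn {T : Type} (eqd : forall a b : T, {a = b} + {a <> b}) (ks : list T) (k : T) : nat :=
  match ks with nil => 0%nat | cons a r => if eqd a k then 0%nat else S (posn eqd r k) end.

Lemma posn_spec {T : Type} (eqd : forall a b : T, {a = b} + {a <> b}) ks k d :
  In k ks -> (posn eqd ks k < length ks)%nat /\ nth (posn eqd ks k) ks d = k.
Proof.
induction ks as [|a r IH]; simpl; [tauto|].
intros H. destruct (eqd a k) as [->|ne]; [split; [lia|reflexivity]|].
destruct H as [->|H]; [congruence|]. destruct (IH H) as [h1 h2]. split; [lia|exact h2].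
Qed.

From mathcomp Require Import all_boot all_order all_algebra.
From mathcomp Require Import all_classical all_reals all_analysis.
From mathcomp Require Import Rstruct Rstruct_topology finmap.
Import Order.TTheory GRing.Theory Num.Theory.
Local Open Scope ring_scope.
Local Open Scope classical_set_scope.

Lemma In_mem (T : eqType) (x : T) (s : seq T) : List.In x s -> x \in s.
Proof. elim: s => //= a s IH [->|/IH]; rewrite in_cons ?eqxx // => ->; by rewrite orbT. Qed.

Lemma mem_In (T : eqType) (x : T) (s : seq T) : x \in s -> List.In x s.
Proof. elim: s => //= a s IH; rewrite in_cons => /orP [/eqP ->|/IH]; [left|right] => //. Qed.

Lemma row_box_cover n (lo hi : 'I_n.+1 -> R) (delta : 'rV[R]_n.+1 -> R) :
  (forall w, 0 < delta w) ->
  exists W : {fset 'rV[R]_n.+1},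
    (forall w, w \in W -> forall i, lo i <= w ord0 i <= hi i) /\
    (forall v : 'rV[R]_n.+1, (forall i, lo i <= v ord0 i <= hi i) -> exists2 w, w \in W & ball w (delta w) v).
Proof.
move=> dpos.
pose A := fun i => `[lo i, hi i]%classic.
pose B := [set v : 'rV[R]_n.+1 | forall i, A i (v ord0 i)].
have : compact B by apply: rV_compact => i; exact: segment_compact.
rewrite compact_cover => /(_ _ B (fun w => ball w (delta w)) (fun w _ => ball_open _ _)) [].
  by move=> v Bv; exists v => //; apply: ballxx; exact: dpos.
move=> W sWB cov; exists W; split.
  by move=> w /sWB /set_mem Bw i; have := Bw i; rewrite /A /= in_itv.
move=> v Bv; have [|w Ww bw] := cov v; last by exists w.
by move=> i; rewrite /A /= in_itv; exact: Bv.
Qed.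

(* Heine-Borel for boxes indexed by a list of coordinates: number the
   coordinates by their positions in ks and apply row_box_cover. *)
Lemma box_cover : box_cover_property.
Proof.
move=> T eqd ks lo hi delta dpos.
case: ks => [|k0 ks'].
  exists [:: fun _ => 0%R]; split; first by move=> x _ k [].
  by move=> y _; exists (fun _ => 0%R); split; [left|move=> k []].
set ks := k0 :: ks'; set n := length ks'.
pose fv (w : 'rV[R]_n.+1) : T -> R := fun k => w ord0 (inord (posn eqd ks k)).
pose rv (y : T -> R) : 'rV[R]_n.+1 := \row_(i < n.+1) y (List.nth i ks k0).
have kpos k : List.In k ks -> (posn eqd ks k < n.+1)%N /\ List.nth (posn eqd ks k) ks k0 = k.
  by move=> /(posn_spec eqd ks k k0) [/ssrnat.ltP pl pn].
have [|W [WB Wcov]] := row_box_cover n (fun i => lo (List.nth i ks k0)) (fun i => hi (List.nth i ks k0))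
  (fun w => delta (fv w)).
  by move=> w; apply/RltP; exact: dpos.
exists (List.map fv (enum_fset W)); split.
  move=> x /List.in_map_iff [w [<- /In_mem /WB Bw]] k /kpos [pl pn].
  by have /andP [/RleP h1 /RleP h2] := Bw (inord (posn eqd ks k)); rewrite /fv; move: h1 h2; rewrite inordK // pn.
move=> y ybox.
have [|w Ww bw] := Wcov (rv y).
  move=> i; rewrite /rv mxE.
  have hi' : List.In (List.nth i ks k0) ks by apply: List.nth_In; apply/ssrnat.ltP; exact: ltn_ord i.
  by have [/RleP -> /RleP ->] := ybox _ hi'.
exists (fv w); split; first by apply: List.in_map; apply: mem_In.
move=> k /kpos [pl pn].
move: bw; rewrite /ball /= => -[_ /(_ ord0 (inord (posn eqd ks k)))].
by rewrite /ball /= /rv mxE inordK // pn RabsE distrC => /RltP.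
Qed.

Theorem mainTheorem19 (G : MGraph) (D : Div) (d : Z) :
  compact_connected_metric_graph G ->
  is_divisor G D -> effective D -> has_degree D d ->
  compact_in G (linear_system G D).
Proof.
intros [HnV [HG Hconn]] HD HDe Hdeg.
set (N := kink_bound d). set (M := vertex_bound G d).
apply (compact_transfer G (linear_system G D) Param param_eq_dec (param_keys G N)
  (box_lo M d) (box_hi G M d) (divisor_of G D N) (admissible G D N)).
- intros x Hb Cx. apply (param_in_system G D N M d); auto.
- intros x Hb Cx. apply (param_continuous G D N M d); auto.
- intros x Hb nC. apply (not_admissible_open G D N M d); auto.
- exact box_cover.
- intros E HE. apply (param_surjective G D d); auto.
Qed.
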